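(* Let $F:\mathbb Z^2\to\Lambda \mathrm{SU}_2$ be a discrete extended frame with data $u,p,q$ (as defined in the context). For every $(n,m)\in\mathbb Z^2$ decompose $F(n,m)$ by the two Birkhoff decompositions $$F=F_+F_-=G_-G_+,\qquad F_+\in\Lambda^+_*\mathrm{SU}_2,\ F_-\in\Lambda^-\mathrm{SU}_2,\ G_-\in\Lambda^-_*\mathrm{SU}_2,\ G_+\in\Lambda^+\mathrm{SU}_2 .$$ Then $F_+(n,m)$ does not depend on $m$ and $G_-(n,m)$ does not depend on $n$, and $$\xi_+:=F_+(n,m)^{-1}F_+(n+1,m)=\frac{1}{\Delta_+}\begin{pmatrix}1&\frac{i}{2}p\,e^{-i\alpha}\lambda\\ \frac{i}{2}p\,e^{i\alpha}\lambda&1\end{pmatrix},\qquad \xi_-:=G_-(n,m)^{-1}G_-(n,m+1)=\frac{1}{\Delta_-}\begin{pmatrix}1&-\frac{i}{2}q\,e^{i\beta}\lambda^{-1}\\ -\frac{i}{2}q\,e^{-i\beta}\lambda^{-1}&1\end{pmatrix},$$ where $p=p(n)$, $q=q(m)$, and $\alpha=\alpha(n)$, $\beta=\beta(m)$ are given by $$\alpha(n)=\tfrac12 u(n+1,0)+\tfrac12 u(n,0)-u(0,0),\qquad \beta(m)=\tfrac12 u(0,m+1)+\tfrac12 u(0,m).$$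
   Context: Pauli matrices: $\sigma_1=\begin{pmatrix}0&1\\1&0\end{pmatrix}$, $\sigma_2=\begin{pmatrix}0&-i\\i&0\end{pmatrix}$, $\sigma_3=\begin{pmatrix}1&0\\0&-1\end{pmatrix}$. Loop groups: $\Lambda\mathrm{SU}_2$ is the group of maps $g$ of the spectral parameter $\lambda$ (defined on $S^1\cup\mathbb R^\times$) into $\mathrm{SL}_2\mathbb C$ whose matrix entries lie in the Wiener algebra $\{\sum_{k\in\mathbb Z}f_k\lambda^k:\sum|f_k|<\infty\}$, satisfying the reality condition $g(\lambda)=\big(\overline{g(\bar\lambda)}^{\,t}\big)^{-1}$ and the twisting condition $\sigma_3g(\lambda)\sigma_3^{-1}=g(-\lambda)$. $\Lambda^+\mathrm{SU}_2$ (resp. $\Lambda^-\mathrm{SU}_2$) is the subgroup of loops extending holomorphically to the open unit disk (resp. to $\{|\lambda|>1\}\cup\{\infty\}$); $\Lambda^+_*\mathrm{SU}_2=\{g\in\Lambda^+\mathrm{SU}_2:g(0)=\mathrm{Id}\}$ and $\Lambda^-_*\mathrm{SU}_2=\{g\in\Lambda^-\mathrm{SU}_2:g(\infty)=\mathrm{Id}\}$. Birkhoff decomposition (known fact): the multiplication maps $\Lambda^+_*\mathrm{SU}_2\times\Lambda^-\mathrm{SU}_2\to\Lambda\mathrm{SU}_2$ and $\Lambda^-_*\mathrm{SU}_2\times\Lambda^+\mathrm{SU}_2\to\Lambda\mathrm{SU}_2$ are diffeomorphisms onto $\Lambda\mathrm{SU}_2$; so every loop factors uniquely in each of these two ways.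 Discrete setting: for a function $f$ on $\mathbb Z^2$ write $f_1=f(n+1,m)$, $f_2=f(n,m+1)$, $f_{12}=f(n+1,m+1)$. Let $p:\mathbb Z\to\mathbb R$ (a function of $n$) and $q:\mathbb Z\to\mathbb R$ (a function of $m$) satisfy $0<|p/2|<1$, $0<|q/2|<1$, and put $\Delta_+=\sqrt{1+(p/2)^2\lambda^2}$, $\Delta_-=\sqrt{1+(q/2)^2\lambda^{-2}}$ (branches positive for $\lambda>0$; $\Delta_+$ is holomorphic and nonvanishing on the closed unit disk, $\Delta_-$ on its closed exterior including $\infty$). For $u:\mathbb Z^2\to\mathbb R$ set $$U=\frac1{\Delta_+}\begin{pmatrix}e^{-\frac i2(u_1-u)}&\frac i2p\lambda\\ \frac i2p\lambda&e^{\frac i2(u_1-u)}\end{pmatrix},\qquad V=\frac1{\Delta_-}\begin{pmatrix}1&-\frac i2q\,e^{\frac i2(u_2+u)}\lambda^{-1}\\ -\frac i2q\,e^{-\frac i2(u_2+u)}\lambda^{-1}&1\end{pmatrix}.$$ A discrete extended frame with data $u,p,q$ is a map $F:\mathbb Z^2\to\Lambda\mathrm{SU}_2$ with $F(0,0)=\mathrm{Id}$, $F_1=FU$ and $F_2=FV$. (Its compatibility $VU_2=UV_1$ is the discrete sine-Gordon equation $\sin\frac{u_{12}-u_1-u_2+u}{4}=\frac{pq}{4}\sin\frac{u_{12}+u_1+u_2+u}{4}$.) The associated discrete pseudospherical surfaces are $f^\lambda=\lambda\,(\partial_\lambda F)F^{-1}$, $\lambda>0$. *)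

From Stdlib Require Import Reals ZArith.
Open Scope R_scope.

Record Cplx := mkC { Re : R ; Im : R }.

Definition RtoC (x : R) : Cplx := mkC x 0.
Definition C0 : Cplx := mkC 0 0.
Definition C1 : Cplx := mkC 1 0.
Definition Ci : Cplx := mkC 0 1.
Definition Cadd (z w : Cplx) : Cplx := mkC (Re z + Re w) (Im z + Im w).
Definition Copp (z : Cplx) : Cplx := mkC (- Re z) (- Im z).
Definition Cmul (z w : Cplx) : Cplx :=
  mkC (Re z * Re w - Im z * Im w) (Re z * Im w + Im z * Re w).
Definition Cconj (z : Cplx) : Cplx := mkC (Re z) (- Im z).
Definition Cnorm2 (z : Cplx) : R := Re z * Re z + Im z * Im z.
Definition Cnorm (z : Cplx) : R := sqrt (Cnorm2 z).
Definition Cinv (z : Cplx) : Cplx := mkC (Re z / Cnorm2 z) (- Im z / Cnorm2 z).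
Definition Cexpi (theta : R) : Cplx := mkC (cos theta) (sin theta).
(* principal square root (branch cut on the negative real axis) *)
Definition Csqrt (z : Cplx) : Cplx :=
  mkC (sqrt ((Cnorm z + Re z) / 2))
      ((if Rlt_dec (Im z) 0 then -1 else 1) * sqrt ((Cnorm z - Re z) / 2)).
Fixpoint Cpow (z : Cplx) (n : nat) : Cplx :=
  match n with O => C1 | S k => Cmul z (Cpow z k) end.
Definition Cpowz (z : Cplx) (k : Z) : Cplx :=
  if (0 <=? k)%Z then Cpow z (Z.to_nat k) else Cinv (Cpow z (Z.to_nat (- k))).

Definition onS1 (l : Cplx) : Prop := Cnorm2 l = 1.

Record M2 := mkM2 { a11 : Cplx ; a12 : Cplx ; a21 : Cplx ; a22 : Cplx }.

Definition Mid : M2 := mkM2 C1 C0 C0 C1.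
Definition Mzero : M2 := mkM2 C0 C0 C0 C0.
Definition Mmul (A B : M2) : M2 :=
  mkM2 (Cadd (Cmul (a11 A) (a11 B)) (Cmul (a12 A) (a21 B)))
       (Cadd (Cmul (a11 A) (a12 B)) (Cmul (a12 A) (a22 B)))
       (Cadd (Cmul (a21 A) (a11 B)) (Cmul (a22 A) (a21 B)))
       (Cadd (Cmul (a21 A) (a12 B)) (Cmul (a22 A) (a22 B))).
Definition Mscal (c : Cplx) (A : M2) : M2 :=
  mkM2 (Cmul c (a11 A)) (Cmul c (a12 A)) (Cmul c (a21 A)) (Cmul c (a22 A)).
Definition Mdet (A : M2) : Cplx :=
  Cadd (Cmul (a11 A) (a22 A)) (Copp (Cmul (a12 A) (a21 A))).
Definition Minv (A : M2) : M2 :=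
  Mscal (Cinv (Mdet A)) (mkM2 (a22 A) (Copp (a12 A)) (Copp (a21 A)) (a11 A)).
Definition Mstar (A : M2) : M2 :=
  mkM2 (Cconj (a11 A)) (Cconj (a21 A)) (Cconj (a12 A)) (Cconj (a22 A)).
Definition sigma3 : M2 := mkM2 C1 C0 C0 (Copp C1).

Definition Cseries_cv (a : nat -> Cplx) (w : Cplx) : Prop :=
  Un_cv (fun N => sum_f_R0 (fun n => Re (a n)) N) (Re w) /\
  Un_cv (fun N => sum_f_R0 (fun n => Im (a n)) N) (Im w).

Definition abs_summable_Z (f : Z -> Cplx) : Prop :=
  exists l : R, Un_cv (fun N => sum_f_R0
     (fun n => Cnorm (f (Z.of_nat n)) + Cnorm (f (- Z.of_nat n)%Z)) N) l.

(* the Laurent series sum_{k in Z} f_k l^k, grouped symmetrically *)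
Definition laurent_term (f : Z -> Cplx) (l : Cplx) (n : nat) : Cplx :=
  Cadd (Cmul (f (Z.of_nat n)) (Cpowz l (Z.of_nat n)))
       (if Nat.eqb n 0 then C0
        else Cmul (f (- Z.of_nat n)%Z) (Cpowz l (- Z.of_nat n)%Z)).

Definition wiener_coeffs (g : Cplx -> Cplx) (f : Z -> Cplx) : Prop :=
  abs_summable_Z f /\
  forall l, onS1 l -> Cseries_cv (laurent_term f l) (g l).

Definition loop_coeffs (g : Cplx -> M2) (c : Z -> M2) : Prop :=
  wiener_coeffs (fun l => a11 (g l)) (fun k => a11 (c k)) /\
  wiener_coeffs (fun l => a12 (g l)) (fun k => a12 (c k)) /\
  wiener_coeffs (fun l => a21 (g l)) (fun k => a21 (c k)) /\
  wiener_coeffs (fun l => a22 (g l)) (fun k => a22 (c k)).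

(* Lambda SU_2 : SL_2(Cplx)-valued Wiener loops with reality and twisting conditions *)
Definition LambdaSU2 (g : Cplx -> M2) : Prop :=
  (exists c, loop_coeffs g c) /\
  forall l, onS1 l ->
    Mdet (g l) = C1 /\
    g l = Minv (Mstar (g (Cconj l))) /\
    Mmul (Mmul sigma3 (g l)) (Minv sigma3) = g (Copp l).

(* holomorphic extension to the open unit disk: no negative Fourier modes *)
Definition LambdaPlus (g : Cplx -> M2) : Prop :=
  LambdaSU2 g /\
  exists c, loop_coeffs g c /\ forall k, (k < 0)%Z -> c k = Mzero.
(* ... and g(0) = Id *)
Definition LambdaPlusStar (g : Cplx -> M2) : Prop :=
  LambdaSU2 g /\
  exists c, loop_coeffs g c /\ (forall k, (k < 0)%Z -> c k = Mzero) /\ c 0%Z = Mid.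
(* holomorphic extension to {|l|>1} u {oo}: no positive Fourier modes *)
Definition LambdaMinus (g : Cplx -> M2) : Prop :=
  LambdaSU2 g /\
  exists c, loop_coeffs g c /\ forall k, (0 < k)%Z -> c k = Mzero.
(* ... and g(oo) = Id *)
Definition LambdaMinusStar (g : Cplx -> M2) : Prop :=
  LambdaSU2 g /\
  exists c, loop_coeffs g c /\ (forall k, (0 < k)%Z -> c k = Mzero) /\ c 0%Z = Mid.

Definition halfI (x : R) : Cplx := mkC 0 (x / 2).

Definition DeltaP (p : R) (l : Cplx) : Cplx :=
  Csqrt (Cadd C1 (Cmul (RtoC ((p / 2) ^ 2)) (Cmul l l))).
Definition DeltaM (q : R) (l : Cplx) : Cplx :=
  Csqrt (Cadd C1 (Cmul (RtoC ((q / 2) ^ 2)) (Cinv (Cmul l l)))).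

Definition Umat (u : Z -> Z -> R) (p : Z -> R) (n m : Z) (l : Cplx) : M2 :=
  Mscal (Cinv (DeltaP (p n) l))
    (mkM2 (Cexpi (- (u (n + 1)%Z m - u n m) / 2))
          (Cmul (halfI (p n)) l)
          (Cmul (halfI (p n)) l)
          (Cexpi ((u (n + 1)%Z m - u n m) / 2))).

Definition Vmat (u : Z -> Z -> R) (q : Z -> R) (n m : Z) (l : Cplx) : M2 :=
  Mscal (Cinv (DeltaM (q m) l))
    (mkM2 C1
          (Copp (Cmul (Cmul (halfI (q m)) (Cexpi ((u n (m + 1)%Z + u n m) / 2))) (Cinv l)))
          (Copp (Cmul (Cmul (halfI (q m)) (Cexpi (- (u n (m + 1)%Z + u n m) / 2))) (Cinv l)))
          C1).

Definition discrete_extended_frame (F : Z -> Z -> Cplx -> M2)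
    (u : Z -> Z -> R) (p q : Z -> R) : Prop :=
  (forall n m, LambdaSU2 (F n m)) /\
  (forall l, onS1 l -> F 0%Z 0%Z l = Mid) /\
  (forall n m l, onS1 l -> F (n + 1)%Z m l = Mmul (F n m l) (Umat u p n m l)) /\
  (forall n m l, onS1 l -> F n (m + 1)%Z l = Mmul (F n m l) (Vmat u q n m l)).

Definition alpha (u : Z -> Z -> R) (n : Z) : R :=
  / 2 * u (n + 1)%Z 0%Z + / 2 * u n 0%Z - u 0%Z 0%Z.
Definition beta (u : Z -> Z -> R) (m : Z) : R :=
  / 2 * u 0%Z (m + 1)%Z + / 2 * u 0%Z m.

Definition xi_plus (p a : R) (l : Cplx) : M2 :=
  Mscal (Cinv (DeltaP p l))
    (mkM2 C1 (Cmul (Cmul (halfI p) (Cexpi (- a))) l)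
             (Cmul (Cmul (halfI p) (Cexpi a)) l) C1).
Definition xi_minus (q b : R) (l : Cplx) : M2 :=
  Mscal (Cinv (DeltaM q l))
    (mkM2 C1 (Copp (Cmul (Cmul (halfI q) (Cexpi b)) (Cinv l)))
             (Copp (Cmul (Cmul (halfI q) (Cexpi (- b))) (Cinv l))) C1).

(* Both assertions come from the uniqueness of Birkhoff factorisations on the unit
   circle. Since F(n,m+1) = F(n,m) V(n,m) with V holomorphic outside the disk,
   F+(n,m) (F-(n,m) V(n,m)) is again a plus-minus factorisation of F(n,m+1), so F+ does
   not depend on m; symmetrically G- does not depend on n because U(n,m) is holomorphic
   inside the disk. On the axis m = 0 one has U(n,0) = D(-g n) xi+(n) D(g (n+1)) with
   D(t) = diag(e^{-it}, e^{it}) and g n = (u(n,0) - u(0,0))/2, so the plus factor of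
   F(n,0) = (F(n,0) D(-g n)) D(g n) is built from the xi+ by multiplication; on the axis
   n = 0, V(0,m) = xi-(m) is already holomorphic outside, so G-(0,m) = F(0,m).
   Uniqueness reduces to the fact that a function on the circle which is a power series
   both in l and in 1/l = conj l is constant; its non-constant coefficients are shown to
   vanish by averaging over the N-th roots of unity for large N. The entries of U, V and
   xi are power series because 1/Delta is, by the binomial series of (1 + w)^(1/2). *)

From Coquelicot Require Import Coquelicot.
From Stdlib Require Import Reals ZArith Lra Lia Psatz FunctionalExtensionality.
Open Scope R_scope.

(** * Complex arithmetic *)

Lemma Cplx_ext z w : Re z = Re w -> Im z = Im w -> z = w.
Proof. destruct z, w; simpl; intros; subst; reflexivity. Qed.

Ltac cring := apply Cplx_ext; unfold Cadd, Cmul, Copp, Cconj, RtoC, C0, C1, Ci; simpl; ring.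

Lemma M2_ext A B :
  a11 A = a11 B -> a12 A = a12 B -> a21 A = a21 B -> a22 A = a22 B -> A = B.
Proof. destruct A, B; simpl; intros; subst; reflexivity. Qed.

Ltac mring := apply M2_ext; simpl; cring.

(* The l^1 norm |Re z| + |Im z| stands in for the modulus: it is equivalent to it
   and avoids square roots. *)
Definition Cnorm1 (z : Cplx) : R := Rabs (Re z) + Rabs (Im z).

Lemma Cnorm1_ge0 z : 0 <= Cnorm1 z.
Proof. unfold Cnorm1; pose proof (Rabs_pos (Re z)); pose proof (Rabs_pos (Im z)); lra. Qed.

Lemma Cnorm1_mul z w : Cnorm1 (Cmul z w) <= Cnorm1 z * Cnorm1 w.
Proof.
  unfold Cnorm1, Cmul; simpl.
  pose proof (Rabs_triang (Re z * Re w) (- (Im z * Im w))) as H1.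
  pose proof (Rabs_triang (Re z * Im w) (Im z * Re w)) as H2.
  rewrite Rabs_Ropp in H1. rewrite !Rabs_mult in H1, H2.
  pose proof (Rabs_pos (Re z)); pose proof (Rabs_pos (Im z));
  pose proof (Rabs_pos (Re w)); pose proof (Rabs_pos (Im w)).
  unfold Rminus. nra.
Qed.

Lemma Cnorm1_add z w : Cnorm1 (Cadd z w) <= Cnorm1 z + Cnorm1 w.
Proof.
  unfold Cnorm1, Cadd; simpl.
  pose proof (Rabs_triang (Re z) (Re w)); pose proof (Rabs_triang (Im z) (Im w)); lra.
Qed.

Lemma Cnorm1_opp z : Cnorm1 (Copp z) = Cnorm1 z.
Proof. unfold Cnorm1; simpl; rewrite !Rabs_Ropp; reflexivity. Qed.

Lemma Cnorm1_RtoC_mul r z : Cnorm1 (Cmul (RtoC r) z) = Rabs r * Cnorm1 z.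
Proof.
  unfold Cnorm1, RtoC, Cmul; simpl.
  replace (r * Re z - 0 * Im z) with (r * Re z) by ring.
  replace (r * Im z + 0 * Re z) with (r * Im z) by ring.
  rewrite !Rabs_mult. ring.
Qed.

Lemma Cnorm1_le0_eq z : Cnorm1 z <= 0 -> z = C0.
Proof.
  unfold Cnorm1; intro H. pose proof (Rabs_pos (Re z)); pose proof (Rabs_pos (Im z)).
  apply Cplx_ext; simpl; apply Rabs_eq_0; lra.
Qed.

Lemma Cnorm2_mul z w : Cnorm2 (Cmul z w) = Cnorm2 z * Cnorm2 w.
Proof. unfold Cnorm2, Cmul; simpl; ring. Qed.

Lemma Cnorm2_eq0 z : Cnorm2 z = 0 -> z = C0.
Proof. unfold Cnorm2; intro E; apply Cplx_ext; simpl; nra. Qed.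

Lemma Cpow_add z n m : Cpow z (n + m) = Cmul (Cpow z n) (Cpow z m).
Proof. induction n; simpl; [cring| rewrite IHn; cring]. Qed.

Lemma Cnorm2_pow w k : Cnorm2 (Cpow w k) = Cnorm2 w ^ k.
Proof. induction k; simpl; [unfold Cnorm2; simpl; ring| rewrite Cnorm2_mul, IHk; ring]. Qed.

Lemma Cpow_parts_bound w r k : 0 <= r -> Cnorm2 w = r * r ->
  Rabs (Re (Cpow w k)) <= r ^ k /\ Rabs (Im (Cpow w k)) <= r ^ k.
Proof.
  intros Hr Hw. pose proof (Cnorm2_pow w k) as E. rewrite Hw, Rpow_mult_distr in E.
  unfold Cnorm2 in E. pose proof (pow_le r k Hr).
  split; apply Rabs_le; split; nra.
Qed.

Lemma Cnorm1_pow w r k : 0 <= r -> Cnorm2 w = r * r -> Cnorm1 (Cpow w k) <= 2 * r ^ k.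
Proof. intros H1 H2. destruct (Cpow_parts_bound w r k H1 H2). unfold Cnorm1; lra. Qed.

Lemma Cmul_inv_r z : z <> C0 -> Cmul z (Cinv z) = C1.
Proof.
  intro H. assert (Hn : Cnorm2 z <> 0) by (intro E; apply H, Cnorm2_eq0, E).
  destruct z as [a b]. unfold Cnorm2 in Hn; simpl in Hn.
  apply Cplx_ext; unfold Cinv, Cnorm2; simpl; field; auto.
Qed.

Lemma Cmul_eq0_l s d : Cmul s d = C0 -> d <> C0 -> s = C0.
Proof.
  intros H Hd. transitivity (Cmul (Cmul s d) (Cinv d)).
  - transitivity (Cmul s (Cmul d (Cinv d))); [rewrite Cmul_inv_r by auto|]; cring.
  - rewrite H. cring.
Qed.

Lemma Cinv_unique z x : Cmul z x = C1 -> x = Cinv z.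
Proof.
  intro H. assert (Hz : z <> C0).
  { intro E. assert (Re (Cmul z x) = 1) by (rewrite H; reflexivity).
    subst z. simpl in *. lra. }
  transitivity (Cmul (Cmul z (Cinv z)) x); [rewrite Cmul_inv_r by auto; cring|].
  transitivity (Cmul (Cmul z x) (Cinv z)); [cring|]. rewrite H. cring.
Qed.

Lemma Cinv_C1 : Cinv C1 = C1.
Proof. apply Cplx_ext; unfold Cinv, Cnorm2; simpl; field. Qed.

Lemma Cconj_involutive l : Cconj (Cconj l) = l.
Proof. cring. Qed.

Lemma onS1_conj l : onS1 l -> onS1 (Cconj l).
Proof. unfold onS1, Cnorm2; simpl. intro; nra. Qed.

Lemma Cinv_S1 z : onS1 z -> Cinv z = Cconj z.
Proof. unfold onS1; intro H. unfold Cinv. rewrite H. apply Cplx_ext; simpl; field. Qed.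

Lemma onS1_mul z w : onS1 z -> onS1 w -> onS1 (Cmul z w).
Proof. unfold onS1; intros; rewrite Cnorm2_mul; nra. Qed.

Lemma onS1_pow l k : onS1 l -> onS1 (Cpow l k).
Proof. unfold onS1; intro H; rewrite Cnorm2_pow, H; apply pow1. Qed.

Lemma Cpow_conj z k : Cpow (Cconj z) k = Cconj (Cpow z k).
Proof. induction k; simpl; [cring| rewrite IHk; cring]. Qed.

Lemma Cexpi_add x y : Cmul (Cexpi x) (Cexpi y) = Cexpi (x + y).
Proof. apply Cplx_ext; simpl; [rewrite cos_plus| rewrite sin_plus]; ring. Qed.

Lemma Cexpi_0 : Cexpi 0 = C1.
Proof. apply Cplx_ext; simpl; [apply cos_0| apply sin_0]. Qed.

Lemma Cexpi_opp_r x : Cmul (Cexpi x) (Cexpi (- x)) = C1.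
Proof. rewrite Cexpi_add, Rplus_opp_r; apply Cexpi_0. Qed.

Lemma Cexpi_opp_l x : Cmul (Cexpi (- x)) (Cexpi x) = C1.
Proof. rewrite Cexpi_add, Rplus_opp_l; apply Cexpi_0. Qed.

Lemma Cpow_expi x k : Cpow (Cexpi x) k = Cexpi (INR k * x).
Proof.
  induction k.
  - rewrite Rmult_0_l, Cexpi_0; reflexivity.
  - simpl Cpow. rewrite IHk, Cexpi_add, S_INR. f_equal; ring.
Qed.

Lemma Cconj_expi x : Cconj (Cexpi x) = Cexpi (- x).
Proof. apply Cplx_ext; simpl; [rewrite cos_neg| rewrite sin_neg]; reflexivity. Qed.

Lemma Cexpi_2PI_mult k : Cexpi (2 * PI * INR k) = C1.
Proof.
  replace (2 * PI * INR k) with (0 + 2 * INR k * PI) by ring.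
  apply Cplx_ext; simpl; [rewrite cos_period, cos_0| rewrite sin_period, sin_0]; reflexivity.
Qed.

Lemma onS1_expi x : onS1 (Cexpi x).
Proof. unfold onS1, Cnorm2; simpl. rewrite Rplus_comm. apply sin2_cos2. Qed.

Lemma Cnorm1_S1 z : onS1 z -> Cnorm1 z <= 2.
Proof.
  unfold onS1, Cnorm2, Cnorm1; intro H.
  assert (Rabs (Re z) <= 1) by (apply Rabs_le; split; nra).
  assert (Rabs (Im z) <= 1) by (apply Rabs_le; split; nra).
  lra.
Qed.

(** * Finite sums and absolutely convergent series *)

(* As with sum_f_R0, Csum f n has the n + 1 terms f 0, ..., f n. *)
Definition Csum (f : nat -> Cplx) (n : nat) : Cplx :=
  mkC (sum_f_R0 (fun k => Re (f k)) n) (sum_f_R0 (fun k => Im (f k)) n).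

Definition Cseq_cv (u : nat -> Cplx) (L : Cplx) : Prop :=
  Un_cv (fun n => Re (u n)) (Re L) /\ Un_cv (fun n => Im (u n)) (Im L).

Definition Cabs_summable (a : nat -> Cplx) : Prop := ex_series (fun k => Cnorm1 (a k)).

Lemma Csum_S f n : Csum f (S n) = Cadd (Csum f n) (f (S n)).
Proof. apply Cplx_ext; reflexivity. Qed.

Lemma Csum_ext f g n : (forall k, (k <= n)%nat -> f k = g k) -> Csum f n = Csum g n.
Proof. intro H; apply Cplx_ext; simpl; apply sum_eq; intros; rewrite H; auto. Qed.

Lemma Csum_mul_r f c n : Csum (fun k => Cmul (f k) c) n = Cmul (Csum f n) c.
Proof. induction n; [cring|]. rewrite !Csum_S, IHn. cring. Qed.

Lemma Csum_mul_l f c n : Csum (fun k => Cmul c (f k)) n = Cmul c (Csum f n).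
Proof.
  transitivity (Cmul (Csum f n) c); [|cring].
  rewrite <- Csum_mul_r. apply Csum_ext; intros; cring.
Qed.

Lemma Csum_RtoC (f : nat -> R) n : Csum (fun k => RtoC (f k)) n = RtoC (sum_f_R0 f n).
Proof. apply Cplx_ext; simpl; [reflexivity| apply sum_eq_R0; auto]. Qed.

Lemma Csum_comm (h : nat -> nat -> Cplx) J K :
  Csum (fun j => Csum (fun k => h j k) K) J = Csum (fun k => Csum (fun j => h j k) J) K.
Proof.
  apply Cplx_ext; simpl; induction J; simpl; auto; rewrite IHJ, <- plus_sum; reflexivity.
Qed.

Lemma Csum_zero f n : (forall k, (k <= n)%nat -> f k = C0) -> Csum f n = C0.
Proof. intro H; apply Cplx_ext; simpl; apply sum_eq_R0; intros; rewrite H; auto. Qed.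

Lemma Csum_single f m n : (m <= n)%nat ->
  (forall k, (k <= n)%nat -> k <> m -> f k = C0) -> Csum f n = f m.
Proof.
  intros Hm H. induction n.
  - replace m with 0%nat by lia. apply Cplx_ext; reflexivity.
  - rewrite Csum_S. destruct (Nat.eq_dec m (S n)) as [->|Hne].
    + rewrite Csum_zero by (intros; apply H; lia). cring.
    + rewrite IHn, (H (S n)) by (lia || (intros; apply H; lia)). cring.
Qed.

Lemma Cnorm1_Csum f n : Cnorm1 (Csum f n) <= sum_f_R0 (fun k => Cnorm1 (f k)) n.
Proof.
  induction n; [unfold Cnorm1; simpl; lra|].
  rewrite Csum_S. eapply Rle_trans; [apply Cnorm1_add|]. simpl. lra.
Qed.

Lemma Csum_geom w n :
  Cmul (Csum (fun j => Cpow w j) n) (Cadd w (Copp C1)) = Cadd (Cpow w (S n)) (Copp C1).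
Proof.
  induction n; [cring|].
  rewrite Csum_S.
  transitivity (Cadd (Cmul (Csum (fun j => Cpow w j) n) (Cadd w (Copp C1)))
                     (Cmul (Cpow w (S n)) (Cadd w (Copp C1)))); [cring|].
  rewrite IHn. change (Cpow w (S (S n))) with (Cmul w (Cpow w (S n))). cring.
Qed.

Lemma Un_cv_is_series a l : Un_cv (fun N => sum_f_R0 a N) l <-> is_series a l.
Proof. rewrite is_series_Reals. unfold infinite_sum, Un_cv. tauto. Qed.

Lemma ex_series_R_le (a b : nat -> R) :
  (forall n, 0 <= a n <= b n) -> ex_series b -> ex_series a.
Proof.
  intros H Hb. apply (@ex_series_le R_AbsRing R_CompleteNormedModule _ b); auto.
  intro n. change (norm (a n)) with (Rabs (a n)). rewrite Rabs_right; [apply H|].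
  destruct (H n); lra.
Qed.

Lemma ex_series_R_scal c (a : nat -> R) : ex_series a -> ex_series (fun n => c * a n).
Proof. apply (@ex_series_scal_l R_AbsRing R_CompleteNormedModule). Qed.

Lemma ex_series_R_plus (a b : nat -> R) :
  ex_series a -> ex_series b -> ex_series (fun n => a n + b n).
Proof. apply (@ex_series_plus R_AbsRing R_CompleteNormedModule). Qed.

Lemma sum_f_R0_eventually_const (a : nat -> R) N n :
  (forall k, (N < k)%nat -> a k = 0) -> (N <= n)%nat -> sum_f_R0 a n = sum_f_R0 a N.
Proof.
  intros H Hn. destruct (Nat.eq_dec n N); [subst; auto|].
  rewrite (tech2 _ N n) by lia. rewrite (sum_eq_R0 (fun i => a (S N + i)%nat)); [ring|].
  intros; apply H; lia.
Qed.

Lemma Un_cv_eventually_const (u : nat -> R) N :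
  (forall n, (N <= n)%nat -> u n = u N) -> Un_cv u (u N).
Proof.
  intros H eps Heps; exists N; intros n Hn; unfold Rdist.
  rewrite H, Rminus_diag, Rabs_R0 by lia; lra.
Qed.

Lemma ex_series_R_finite (a : nat -> R) N : (forall k, (N < k)%nat -> a k = 0) -> ex_series a.
Proof.
  intro H. exists (sum_f_R0 a N). apply Un_cv_is_series.
  apply (Un_cv_eventually_const (fun n => sum_f_R0 a n)); intros.
  apply sum_f_R0_eventually_const; auto.
Qed.

Lemma Un_cv_le u l N B : Un_cv u l -> (forall n, (N <= n)%nat -> u n <= B) -> l <= B.
Proof.
  intros H HB. destruct (Rle_or_lt l B); auto.
  destruct (H (l - B) ltac:(lra)) as [N1 HN1].
  specialize (HN1 (max N N1) ltac:(lia)). specialize (HB (max N N1) ltac:(lia)).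
  unfold Rdist in HN1. apply Rabs_def2 in HN1. lra.
Qed.

Lemma Un_cv_ge u l N B : Un_cv u l -> (forall n, (N <= n)%nat -> B <= u n) -> B <= l.
Proof.
  intros H HB. apply Ropp_le_cancel, (Un_cv_le (fun n => - u n) _ N); [|intros; apply Ropp_le_contravar; auto].
  apply CV_opp, H.
Qed.

Lemma Un_cv_const c : Un_cv (fun _ => c) c.
Proof. intros eps H; exists 0%nat; intros; unfold Rdist; rewrite Rminus_diag, Rabs_R0; lra. Qed.

Lemma Un_cv_scal_plus u v x y c d : Un_cv u x -> Un_cv v y ->
  Un_cv (fun n => c * u n + d * v n) (c * x + d * y).
Proof.
  intros H1 H2. apply CV_plus; apply (CV_mult (fun _ => _)); auto; apply Un_cv_const.
Qed.

Lemma Un_cv_shift u v L : (forall N, v (S N) = u N) -> Un_cv u L -> Un_cv v L.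
Proof.
  intros E H eps Heps. destruct (H eps Heps) as [N HN]. exists (S N).
  intros n Hn. destruct n; [lia|]. rewrite E. apply HN. lia.
Qed.

Lemma Cseq_cv_ext u v L : (forall n, u n = v n) -> Cseq_cv u L -> Cseq_cv v L.
Proof. intros E H. replace v with u; auto. apply functional_extensionality; auto. Qed.

Lemma Cseq_cv_Cseries A a : Cseries_cv A a -> Cseq_cv (Csum A) a.
Proof. intros [H1 H2]; split; simpl; auto. Qed.

Lemma Cseries_Cseq_cv A a : Cseq_cv (Csum A) a -> Cseries_cv A a.
Proof. intros [H1 H2]; split; simpl; auto. Qed.

Lemma Cseq_cv_scal c u L : Cseq_cv u L -> Cseq_cv (fun n => Cmul c (u n)) (Cmul c L).
Proof.
  intros [H1 H2]; split; simpl.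
  - replace (Re c * Re L - Im c * Im L) with (Re c * Re L + - Im c * Im L) by ring.
    eapply Un_cv_ext; [|apply (Un_cv_scal_plus _ _ _ _ (Re c) (- Im c) H1 H2)]. intro; simpl; ring.
  - replace (Re c * Im L + Im c * Re L) with (Im c * Re L + Re c * Im L) by ring.
    eapply Un_cv_ext; [|apply (Un_cv_scal_plus _ _ _ _ (Im c) (Re c) H1 H2)]. intro; simpl; ring.
Qed.

Lemma Cseq_cv_Csum (u : nat -> nat -> Cplx) (L : nat -> Cplx) J :
  (forall j, (j <= J)%nat -> Cseq_cv (u j) (L j)) ->
  Cseq_cv (fun n => Csum (fun j => u j n) J) (Csum L J).
Proof.
  induction J; intro H.
  - destruct (H 0%nat (le_n _)) as [H1 H2]; split; simpl; auto.
  - destruct (IHJ ltac:(intros; apply H; lia)) as [H1 H2].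
    destruct (H (S J) (le_n _)) as [H3 H4].
    split; simpl; apply CV_plus; auto.
Qed.

Lemma Cseq_cv_dist_le u L c N B : Cseq_cv u L ->
  (forall n, (N <= n)%nat -> Cnorm1 (Cadd (u n) (Copp c)) <= B) -> Cnorm1 (Cadd L (Copp c)) <= B.
Proof.
  intros [H1 H2] HB. unfold Cnorm1 in *; simpl in *.
  apply (Un_cv_le (fun n => Rabs (Re (u n) + - Re c) + Rabs (Im (u n) + - Im c)) _ N); auto.
  apply CV_plus; apply cv_cvabs; apply CV_minus; auto; apply Un_cv_const.
Qed.

Lemma Cseries_ext A B a : (forall k, A k = B k) -> Cseries_cv A a -> Cseries_cv B a.
Proof. intros H; replace B with A; auto. apply functional_extensionality; auto. Qed.

Lemma Cseries_unique A a b : Cseries_cv A a -> Cseries_cv A b -> a = b.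
Proof. intros [H1 H2] [H3 H4]. apply Cplx_ext; eapply UL_sequence; eauto. Qed.

Lemma Cseries_finite A N : (forall k, (N < k)%nat -> A k = C0) -> Cseries_cv A (Csum A N).
Proof.
  intro H. split; simpl;
    apply (Un_cv_eventually_const (fun n => sum_f_R0 _ n)); intros;
    apply sum_f_R0_eventually_const; auto; intros; rewrite H; auto.
Qed.

Lemma Cseries_add A B a b : Cseries_cv A a -> Cseries_cv B b ->
  Cseries_cv (fun k => Cadd (A k) (B k)) (Cadd a b).
Proof.
  intros [H1 H2] [H3 H4]; split; simpl;
    (eapply Un_cv_ext; [|apply CV_plus; eassumption]); intro n; simpl; rewrite plus_sum; reflexivity.
Qed.

Lemma Cseries_scal c A a : Cseries_cv A a -> Cseries_cv (fun k => Cmul c (A k)) (Cmul c a).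
Proof.
  intro H. apply Cseries_Cseq_cv. eapply Cseq_cv_ext; [|apply Cseq_cv_scal, Cseq_cv_Cseries, H].
  intro n. symmetry. apply Csum_mul_l.
Qed.

Lemma Cseries_shift A B b : Cseries_cv B b -> A 0%nat = C0 -> (forall k, A (S k) = B k) ->
  Cseries_cv A b.
Proof.
  intros H E0 ES. apply Cseries_Cseq_cv. apply Cseq_cv_Cseries in H. destruct H as [H1 H2].
  assert (E : forall N, Csum A (S N) = Csum B N).
  { induction N; rewrite Csum_S; [|rewrite IHN, ES; apply Cplx_ext; reflexivity].
    apply Cplx_ext; simpl; rewrite E0, ES; simpl; ring. }
  split; [apply (Un_cv_shift _ _ _ (fun N => f_equal Re (E N)) H1)
         |apply (Un_cv_shift _ _ _ (fun N => f_equal Im (E N)) H2)].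
Qed.

Lemma Cabs_summable_Re A : Cabs_summable A -> ex_series (fun k => Rabs (Re (A k))).
Proof.
  apply ex_series_R_le. intro n. split; [apply Rabs_pos|].
  unfold Cnorm1. pose proof (Rabs_pos (Im (A n))); lra.
Qed.

Lemma Cabs_summable_Im A : Cabs_summable A -> ex_series (fun k => Rabs (Im (A k))).
Proof.
  apply ex_series_R_le. intro n. split; [apply Rabs_pos|].
  unfold Cnorm1. pose proof (Rabs_pos (Re (A n))); lra.
Qed.

Lemma Cabs_summable_cv A : Cabs_summable A -> exists a, Cseries_cv A a.
Proof.
  intro H.
  pose proof (Series_correct _ (ex_series_Rabs _ (Cabs_summable_Re _ H))) as H1.
  pose proof (Series_correct _ (ex_series_Rabs _ (Cabs_summable_Im _ H))) as H2.
  exists (mkC (Series (fun k => Re (A k))) (Series (fun k => Im (A k)))).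
  split; simpl; apply Un_cv_is_series; auto.
Qed.

Lemma Cabs_summable_le A (b : nat -> R) :
  (forall k, Cnorm1 (A k) <= b k) -> ex_series b -> Cabs_summable A.
Proof. intros H. apply ex_series_R_le. intro k; split; [apply Cnorm1_ge0| apply H]. Qed.

Lemma Cabs_summable_add A B : Cabs_summable A -> Cabs_summable B ->
  Cabs_summable (fun k => Cadd (A k) (B k)).
Proof.
  intros HA HB. apply (Cabs_summable_le _ (fun n => Cnorm1 (A n) + Cnorm1 (B n)));
    [intro; apply Cnorm1_add| apply ex_series_R_plus; auto].
Qed.

Lemma Cabs_summable_scal c A : Cabs_summable A -> Cabs_summable (fun k => Cmul c (A k)).
Proof.
  intros HA. apply (Cabs_summable_le _ (fun n => Cnorm1 c * Cnorm1 (A n)));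
    [intro; apply Cnorm1_mul| apply ex_series_R_scal; auto].
Qed.

Lemma Cabs_summable_geom A r c : 0 <= r < 1 ->
  (forall k, Cnorm1 (A k) <= c * r ^ k) -> Cabs_summable A.
Proof.
  intros Hr H. apply (Cabs_summable_le _ _ H). apply ex_series_R_scal, ex_series_geom.
  rewrite Rabs_right; lra.
Qed.

Definition Cconv (a b : nat -> Cplx) (n : nat) : Cplx :=
  Csum (fun k => Cmul (a k) (b (n - k)%nat)) n.

Lemma Cabs_summable_conv A B : Cabs_summable A -> Cabs_summable B -> Cabs_summable (Cconv A B).
Proof.
  intros HA HB.
  apply (Cabs_summable_le _ (fun n => sum_f_R0 (fun k => Cnorm1 (A k) * Cnorm1 (B (n - k)%nat)) n)).
  - intro n. eapply Rle_trans; [apply Cnorm1_Csum|]. apply sum_Rle; intros. apply Cnorm1_mul.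
  - destruct HA as [la Ha], HB as [lb Hb]. exists (la * lb).
    apply (is_series_mult (fun k => Cnorm1 (A k)) (fun k => Cnorm1 (B k)) la lb Ha Hb);
      [eapply ex_series_ext; [|exists la; exact Ha]| eapply ex_series_ext; [|exists lb; exact Hb]];
      intro n; simpl; rewrite Rabs_right; auto; apply Rle_ge, Cnorm1_ge0.
Qed.

Lemma Cseries_Cconv A B a b : Cseries_cv A a -> Cseries_cv B b ->
  Cabs_summable A -> Cabs_summable B -> Cseries_cv (Cconv A B) (Cmul a b).
Proof.
  intros [Ha1 Ha2] [Hb1 Hb2] HA HB.
  rewrite Un_cv_is_series in Ha1, Ha2, Hb1, Hb2.
  pose proof (Cabs_summable_Re _ HA); pose proof (Cabs_summable_Im _ HA).
  pose proof (Cabs_summable_Re _ HB); pose proof (Cabs_summable_Im _ HB).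
  pose proof (is_series_mult _ _ _ _ Ha1 Hb1 ltac:(auto) ltac:(auto)) as M11.
  pose proof (is_series_mult _ _ _ _ Ha2 Hb2 ltac:(auto) ltac:(auto)) as M22.
  pose proof (is_series_mult _ _ _ _ Ha1 Hb2 ltac:(auto) ltac:(auto)) as M12.
  pose proof (is_series_mult _ _ _ _ Ha2 Hb1 ltac:(auto) ltac:(auto)) as M21.
  split; simpl; rewrite Un_cv_is_series.
  - eapply is_series_ext; [|exact (is_series_minus _ _ _ _ M11 M22)]. intro n; simpl.
    unfold minus, plus, opp; simpl. rewrite minus_sum. ring.
  - eapply is_series_ext; [|exact (is_series_plus _ _ _ _ M12 M21)]. intro n; simpl.
    unfold plus; simpl. rewrite plus_sum. reflexivity.
Qed.

(** * Power series on the unit circle *)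

Definition S1_series (a : nat -> Cplx) (f : Cplx -> Cplx) : Prop :=
  Cabs_summable a /\ forall l, onS1 l -> Cseries_cv (fun k => Cmul (a k) (Cpow l k)) (f l).

Lemma Cabs_summable_S1 a l : onS1 l -> Cabs_summable a ->
  Cabs_summable (fun k => Cmul (a k) (Cpow l k)).
Proof.
  intros Hl Ha. apply (Cabs_summable_le _ (fun n => 2 * Cnorm1 (a n))); [|apply ex_series_R_scal, Ha].
  intro n. eapply Rle_trans; [apply Cnorm1_mul|]. rewrite (Rmult_comm 2).
  apply Rmult_le_compat_l; [apply Cnorm1_ge0| apply Cnorm1_S1, onS1_pow, Hl].
Qed.

Lemma S1_series_ext a f g : S1_series a f -> (forall l, onS1 l -> f l = g l) -> S1_series a g.
Proof. intros [Ha Hf] H; split; auto. intros l Hl; rewrite <- H; auto. Qed.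

Lemma S1_series_mul a b f g :
  S1_series a f -> S1_series b g -> S1_series (Cconv a b) (fun l => Cmul (f l) (g l)).
Proof.
  intros [Ha Hf] [Hb Hg]; split; [apply Cabs_summable_conv; auto|].
  intros l Hl.
  eapply Cseries_ext; [|exact (Cseries_Cconv _ _ _ _ (Hf l Hl) (Hg l Hl)
                                 (Cabs_summable_S1 _ _ Hl Ha) (Cabs_summable_S1 _ _ Hl Hb))].
  intro n. unfold Cconv. rewrite <- Csum_mul_r. apply Csum_ext. intros k Hk.
  replace (Cpow l n) with (Cpow l (k + (n - k))) by (f_equal; lia).
  rewrite Cpow_add. cring.
Qed.

Lemma S1_series_add a b f g : S1_series a f -> S1_series b g ->
  S1_series (fun k => Cadd (a k) (b k)) (fun l => Cadd (f l) (g l)).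
Proof.
  intros [Ha Hf] [Hb Hg]; split; [apply Cabs_summable_add; auto|].
  intros l Hl. eapply Cseries_ext; [|apply (Cseries_add _ _ _ _ (Hf l Hl) (Hg l Hl))].
  intro k; cring.
Qed.

Lemma S1_series_scal c a f : S1_series a f ->
  S1_series (fun k => Cmul c (a k)) (fun l => Cmul c (f l)).
Proof.
  intros [Ha Hf]; split; [apply Cabs_summable_scal; auto|].
  intros l Hl. eapply Cseries_ext; [|apply (Cseries_scal c _ _ (Hf l Hl))]. intro k; cring.
Qed.

Lemma S1_series_opp a f : S1_series a f ->
  S1_series (fun k => Copp (a k)) (fun l => Copp (f l)).
Proof.
  intro H. apply (S1_series_scal (Copp C1)) in H.
  replace (fun k => Copp (a k)) with (fun k => Cmul (Copp C1) (a k))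
    by (apply functional_extensionality; intro; cring).
  eapply S1_series_ext; [exact H|]. intros; cring.
Qed.

Definition Cshift (a : nat -> Cplx) (k : nat) : Cplx :=
  match k with O => C0 | S j => a j end.

Lemma S1_series_shift a f : S1_series a f -> S1_series (Cshift a) (fun l => Cmul l (f l)).
Proof.
  intros [Ha Hf]; split.
  - apply (ex_series_incr_1 (fun k => Cnorm1 (Cshift a k))). exact Ha.
  - intros l Hl. apply (Cseries_shift _ _ _ (Cseries_scal l _ _ (Hf l Hl))); intros; simpl; cring.
Qed.

Definition Cconst_coef (c : Cplx) (k : nat) : Cplx := if Nat.eqb k 0 then c else C0.

Lemma S1_series_const c : S1_series (Cconst_coef c) (fun _ => c).
Proof.
  split.
  - apply (ex_series_R_finite _ 0). intros [|k] Hk; [lia|]. unfold Cnorm1; simpl; rewrite Rabs_R0; ring.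
  - intros l Hl.
    assert (E : Csum (fun k => Cmul (Cconst_coef c k) (Cpow l k)) 0 = c)
      by (apply Cplx_ext; unfold Csum, Cmul, Cconst_coef; simpl; ring).
    pattern c at 2; rewrite <- E. apply Cseries_finite. intros [|k] Hk; [lia|]. cring.
Qed.

(** * Fourier coefficients by averaging over roots of unity *)

Definition root_unity_sum (N : nat) (r : R) : Cplx :=
  Csum (fun j => Cexpi (INR j * (2 * PI * r / INR N))) (N - 1).

Lemma sin_PI_frac_neq0 r N : 0 < INR N -> 0 < Rabs r < INR N -> sin (PI * r / INR N) <> 0.
Proof.
  intros HN Hr. pose proof PI_RGT_0.
  assert (Hpos : forall s, 0 < s < INR N -> sin (PI * s / INR N) <> 0).
  { intros s Hs. apply Rgt_not_eq, sin_gt_0; [apply Rdiv_lt_0_compat; nra|].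
    apply (Rmult_lt_reg_r (INR N)); auto. unfold Rdiv. rewrite Rmult_assoc, Rinv_l by lra. nra. }
  destruct (Rle_or_lt 0 r).
  - rewrite Rabs_right in Hr by lra. apply Hpos; lra.
  - rewrite Rabs_left in Hr by lra.
    replace (PI * r / INR N) with (- (PI * (- r) / INR N)) by (field; lra).
    rewrite sin_neg. apply Ropp_neq_0_compat, Hpos; lra.
Qed.

Lemma root_unity_sum_eq0 N k m : (1 <= N)%nat -> 0 < Rabs (INR k - INR m) < INR N ->
  root_unity_sum N (INR k - INR m) = C0.
Proof.
  intros HN Hr. unfold root_unity_sum.
  set (w := Cexpi (2 * PI * (INR k - INR m) / INR N)).
  assert (HNpos : 0 < INR N) by (apply lt_0_INR; lia).
  rewrite (Csum_ext _ (fun j => Cpow w j)) by (intros; unfold w; rewrite Cpow_expi; reflexivity).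
  apply (Cmul_eq0_l _ (Cadd w (Copp C1))).
  - rewrite Csum_geom. replace (S (N - 1)) with N by lia.
    unfold w. rewrite Cpow_expi.
    replace (INR N * (2 * PI * (INR k - INR m) / INR N)) with (2 * PI * INR k + - (2 * PI * INR m))
      by (field; lra).
    rewrite <- Cexpi_add, <- Cconj_expi, !Cexpi_2PI_mult. cring.
  - intro E. assert (E1 : Re (Cadd w (Copp C1)) = 0) by (rewrite E; reflexivity).
    unfold w in E1; simpl in E1.
    replace (2 * PI * (INR k - INR m) / INR N) with (2 * (PI * (INR k - INR m) / INR N)) in E1
      by (field; lra).
    rewrite cos_2a_sin in E1.
    apply (sin_PI_frac_neq0 _ _ HNpos Hr). nra.
Qed.

Lemma root_unity_sum_0 N : (1 <= N)%nat -> root_unity_sum N 0 = RtoC (INR N).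
Proof.
  intro HN. unfold root_unity_sum.
  rewrite (Csum_ext _ (fun _ => C1)).
  - apply Cplx_ext; simpl; [rewrite sum_cte; replace (S (N - 1)) with N by lia; ring|].
    apply sum_eq_R0; auto.
  - intros j _. replace (INR j * (2 * PI * 0 / INR N)) with 0 by (unfold Rdiv; ring).
    apply Cexpi_0.
Qed.

Lemma Cnorm1_root_unity_sum N r : (1 <= N)%nat -> Cnorm1 (root_unity_sum N r) <= 2 * INR N.
Proof.
  intro HN. unfold root_unity_sum. eapply Rle_trans; [apply Cnorm1_Csum|].
  eapply Rle_trans; [apply (sum_Rle _ (fun _ => 2)); intros; apply Cnorm1_S1, onS1_expi|].
  rewrite sum_cte. replace (S (N - 1)) with N by lia. lra.
Qed.

Definition root_unity (N j : nat) : Cplx := Cexpi (INR j * (2 * PI / INR N)).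

Lemma Cseq_cv_root_unity_average (c : nat -> Cplx) (e : nat -> R) (h : nat -> Cplx) N :
  (forall j, Cseries_cv (fun k => Cmul (c k) (Cexpi (INR j * (2 * PI * e k / INR N)))) (h j)) ->
  Cseq_cv (fun K => Csum (fun k => Cmul (c k) (root_unity_sum N (e k))) K) (Csum h (N - 1)).
Proof.
  intro H.
  eapply Cseq_cv_ext;
    [|apply (Cseq_cv_Csum (fun j => Csum (fun k => Cmul (c k) (Cexpi (INR j * (2 * PI * e k / INR N))))));
      intros; apply Cseq_cv_Cseries, H].
  intro K. simpl. rewrite Csum_comm. apply Csum_ext. intros k _.
  unfold root_unity_sum. rewrite <- Csum_mul_l. reflexivity.
Qed.

Definition tail_mask {A} (zero : A) (N : nat) (x : nat -> A) (k : nat) : A :=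
  if Nat.leb N k then x k else zero.

Lemma sum_tail_mask (x : nat -> R) N K : (1 <= N)%nat ->
  sum_f_R0 (tail_mask 0 N x) K =
  if Nat.leb N K then sum_f_R0 x K - sum_f_R0 x (N - 1) else 0.
Proof.
  intro HN. unfold tail_mask. induction K.
  - simpl. destruct (Nat.leb N 0) eqn:E; [apply Nat.leb_le in E; lia| reflexivity].
  - simpl sum_f_R0 at 1. rewrite IHK.
    destruct (Nat.leb N K) eqn:E1; destruct (Nat.leb N (S K)) eqn:E2;
      try (apply Nat.leb_le in E1); try (apply Nat.leb_le in E2);
      try (apply Nat.leb_gt in E1); try (apply Nat.leb_gt in E2); try lia.
    + simpl. ring.
    + replace N with (S K) by lia. replace (S K - 1)%nat with K by lia. simpl. ring.
    + ring.
Qed.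

Lemma sum_tail_mask_small (x : nat -> R) : (forall k, 0 <= x k) -> ex_series x ->
  forall eps, 0 < eps -> exists N0, forall N, (N0 <= N)%nat ->
  forall K, sum_f_R0 (tail_mask 0 N x) K <= eps.
Proof.
  intros Hx [L HL] eps Heps. apply Un_cv_is_series in HL.
  assert (Hg : forall n, sum_f_R0 x n <= L).
  { apply growing_ineq; auto. intro n; simpl. specialize (Hx (S n)); lra. }
  destruct (HL eps Heps) as [N1 HN1]. exists (S N1). intros N HN K.
  rewrite sum_tail_mask by lia.
  destruct (Nat.leb N K); [|lra].
  specialize (HN1 (N - 1)%nat ltac:(lia)). unfold Rdist in HN1.
  specialize (Hg K). apply Rabs_def2 in HN1. lra.
Qed.

Lemma Csum_split_tail f N K : (1 <= N)%nat -> (N - 1 <= K)%nat ->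
  Csum f K = Cadd (Csum f (N - 1)) (Csum (tail_mask C0 N f) K).
Proof.
  intros HN HK. induction K.
  - replace N with 1%nat by lia.
    rewrite (Csum_zero (tail_mask C0 1 f)) by (intros [|k] Hk; [reflexivity| lia]). simpl. cring.
  - destruct (Nat.eq_dec (N - 1) (S K)) as [E|E].
    + rewrite E, (Csum_zero (tail_mask C0 N f)); [cring|]. intros k Hk. unfold tail_mask.
      destruct (Nat.leb N k) eqn:Ek; [apply Nat.leb_le in Ek; lia| reflexivity].
    + rewrite !Csum_S, IHK by lia.
      replace (tail_mask C0 N f (S K)) with (f (S K)); [cring|].
      unfold tail_mask. replace (Nat.leb N (S K)) with true by (symmetry; apply Nat.leb_le; lia).
      reflexivity.
Qed.

Lemma Cseq_cv_tail_bound (c d : nat -> Cplx) E N B eps : (1 <= N)%nat -> 0 <= B ->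
  Cseq_cv (fun K => Csum (fun k => Cmul (c k) (d k)) K) E ->
  (forall k, Cnorm1 (d k) <= B) ->
  (forall K, sum_f_R0 (tail_mask 0 N (fun k => Cnorm1 (c k))) K <= eps) ->
  Cnorm1 (Cadd E (Copp (Csum (fun k => Cmul (c k) (d k)) (N - 1)))) <= B * eps.
Proof.
  intros HN HB Hcv Hd Htail. apply (Cseq_cv_dist_le _ _ _ (N - 1) _ Hcv). intros K HK.
  rewrite (Csum_split_tail _ N K) by auto.
  match goal with |- Cnorm1 (Cadd (Cadd ?h ?t) (Copp ?h)) <= _ =>
    replace (Cadd (Cadd h t) (Copp h)) with t by cring end.
  eapply Rle_trans; [apply Cnorm1_Csum|].
  eapply Rle_trans; [|apply Rmult_le_compat_l; [exact HB| apply Htail]].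
  rewrite scal_sum. apply sum_Rle. intros k _. unfold tail_mask. destruct (Nat.leb N k).
  - eapply Rle_trans; [apply Cnorm1_mul|].
    apply Rmult_le_compat_l; [apply Cnorm1_ge0| apply Hd].
  - unfold Cnorm1; simpl; rewrite Rabs_R0; lra.
Qed.

Lemma root_unity_phase N j m k : (1 <= N)%nat ->
  Cmul (Cpow (Cconj (root_unity N j)) m) (Cpow (root_unity N j) k) =
  Cexpi (INR j * (2 * PI * (INR k - INR m) / INR N)).
Proof.
  intro HN. unfold root_unity. rewrite Cconj_expi, !Cpow_expi, Cexpi_add. f_equal.
  field. apply not_0_INR; lia.
Qed.

Lemma root_unity_phase_conj N j m k : (1 <= N)%nat ->
  Cmul (Cpow (Cconj (root_unity N j)) m) (Cpow (Cconj (root_unity N j)) k) =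
  Cexpi (INR j * (2 * PI * (INR 0 - INR (k + m)) / INR N)).
Proof.
  intro HN. unfold root_unity. rewrite Cconj_expi, !Cpow_expi, Cexpi_add. f_equal.
  rewrite plus_INR. simpl. field. apply not_0_INR; lia.
Qed.

Definition root_unity_average (N m : nat) (f : Cplx -> Cplx) : Cplx :=
  Csum (fun j => Cmul (Cpow (Cconj (root_unity N j)) m) (f (root_unity N j))) (N - 1).

Lemma root_unity_average_coef a f N m eps : S1_series a f -> (m < N)%nat ->
  (forall K, sum_f_R0 (tail_mask 0 N (fun k => Cnorm1 (a k))) K <= eps) ->
  Cnorm1 (Cadd (root_unity_average N m f) (Copp (Cmul (RtoC (INR N)) (a m)))) <= 2 * INR N * eps.
Proof.
  intros [Ha Hf] HmN Htail.
  assert (HN : (1 <= N)%nat) by lia.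
  assert (Hhead : Csum (fun k => Cmul (a k) (root_unity_sum N (INR k - INR m))) (N - 1)
                  = Cmul (RtoC (INR N)) (a m)).
  { rewrite (Csum_single _ m); [|lia|].
    - rewrite Rminus_diag, root_unity_sum_0 by auto. cring.
    - intros k Hk Hkm. rewrite root_unity_sum_eq0; [cring|lia|].
      pose proof (lt_INR k N ltac:(lia)); pose proof (lt_INR m N HmN).
      pose proof (pos_INR m); pose proof (pos_INR k). split.
      + apply Rabs_pos_lt; intro E0; apply Hkm, INR_eq; lra.
      + apply Rabs_def1; lra. }
  rewrite <- Hhead. apply Cseq_cv_tail_bound; auto.
  - pose proof (pos_INR N); lra.
  - apply Cseq_cv_root_unity_average. intro j.
    eapply Cseries_ext; [|apply Cseries_scal, Hf; unfold root_unity; apply onS1_expi].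
    intro k. rewrite <- root_unity_phase by auto. cring.
  - intro; apply Cnorm1_root_unity_sum; auto.
Qed.

(* For a series in the conjugate variable only the (vanishing) coefficient of
   order -m could contribute, so the average is as small as the tail. *)
Lemma root_unity_average_conj b g N m eps : S1_series b g -> (1 <= m)%nat -> (m < N)%nat ->
  (forall K, sum_f_R0 (tail_mask 0 (N - m) (fun k => Cnorm1 (b k))) K <= eps) ->
  Cnorm1 (root_unity_average N m (fun l => g (Cconj l))) <= 2 * INR N * eps.
Proof.
  intros [Hb Hg] Hm HmN Htail.
  assert (HN : (1 <= N)%nat) by lia.
  assert (Hhead : Csum (fun k => Cmul (b k) (root_unity_sum N (INR 0 - INR (k + m)))) (N - m - 1) = C0).
  { apply Csum_zero. intros k Hk. rewrite root_unity_sum_eq0; [cring|lia|].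
    pose proof (lt_INR (k + m) N ltac:(lia)); pose proof (lt_0_INR m ltac:(lia)).
    rewrite plus_INR in *. pose proof (pos_INR k). simpl.
    rewrite Rabs_left by lra. split; lra. }
  replace (root_unity_average N m (fun l => g (Cconj l))) with
    (Cadd (root_unity_average N m (fun l => g (Cconj l))) (Copp C0)) by cring.
  rewrite <- Hhead. apply Cseq_cv_tail_bound; auto; try lia.
  - pose proof (pos_INR N); lra.
  - apply Cseq_cv_root_unity_average. intro j.
    eapply Cseries_ext; [|apply Cseries_scal, Hg, onS1_conj; unfold root_unity; apply onS1_expi].
    intro k. rewrite <- root_unity_phase_conj by auto. cring.
  - intro; apply Cnorm1_root_unity_sum; auto.
Qed.

(* Averaging f against conj(zeta)^m over the N-th roots of unity gives N a_m up to a
   tail through the expansion in l, but only a tail through the expansion in conj l. *)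
Lemma S1_series_conj_coef_eq0 a b f g : S1_series a f -> S1_series b g ->
  (forall l, onS1 l -> f l = g (Cconj l)) -> forall m, (1 <= m)%nat -> a m = C0.
Proof.
  intros Hf Hg Hfg m Hm.
  apply Cnorm1_le0_eq, Rnot_lt_le; intro Hpos.
  set (eps := Cnorm1 (a m)).
  assert (He : 0 < eps / 8) by (unfold eps; lra).
  destruct (sum_tail_mask_small _ (fun k => Cnorm1_ge0 (a k)) (proj1 Hf) _ He) as [Na HNa].
  destruct (sum_tail_mask_small _ (fun k => Cnorm1_ge0 (b k)) (proj1 Hg) _ He) as [Nb HNb].
  set (N := (Na + Nb + m + 1)%nat).
  assert (HNr : 0 < INR N) by (apply lt_0_INR; lia).
  pose proof (root_unity_average_coef _ _ N m _ Hf ltac:(lia) (HNa N ltac:(lia))) as Ea.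
  pose proof (root_unity_average_conj _ _ N m _ Hg Hm ltac:(lia) (HNb (N - m)%nat ltac:(lia))) as Eb.
  replace (root_unity_average N m (fun l => g (Cconj l))) with (root_unity_average N m f) in Eb
    by (apply Csum_ext; intros; rewrite Hfg; [reflexivity| apply onS1_expi]).
  assert (Hn : Cnorm1 (Cmul (RtoC (INR N)) (a m)) <= INR N * eps / 4 + INR N * eps / 4).
  { set (E := root_unity_average N m f) in *.
    replace (Cmul (RtoC (INR N)) (a m)) with
      (Cadd (Copp (Cadd E (Copp (Cmul (RtoC (INR N)) (a m))))) E) by cring.
    eapply Rle_trans; [apply Cnorm1_add|]. rewrite Cnorm1_opp. lra. }
  rewrite Cnorm1_RtoC_mul, Rabs_right in Hn by lra. fold eps in Hn. nra.
Qed.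

Lemma S1_series_conj_const a b f g : S1_series a f -> S1_series b g ->
  (forall l, onS1 l -> f l = g (Cconj l)) -> forall l, onS1 l -> f l = a 0%nat.
Proof.
  intros Hf Hg H l Hl.
  pose proof (S1_series_conj_coef_eq0 _ _ _ _ Hf Hg H) as Z.
  apply (Cseries_unique _ _ _ (proj2 Hf l Hl)).
  replace (a 0%nat) with (Csum (fun k => Cmul (a k) (Cpow l k)) 0) by (apply Cplx_ext; simpl; ring).
  apply Cseries_finite. intros k Hk. rewrite Z by lia. cring.
Qed.

(** * Matrix loops and uniqueness of Birkhoff factorisations *)

Definition Madj (M : M2) : M2 := mkM2 (a22 M) (Copp (a12 M)) (Copp (a21 M)) (a11 M).

Lemma Mmul_assoc A B C : Mmul (Mmul A B) C = Mmul A (Mmul B C).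
Proof. mring. Qed.

Lemma Mmul_1_l M : Mmul Mid M = M.
Proof. mring. Qed.

Lemma Mmul_1_r M : Mmul M Mid = M.
Proof. mring. Qed.

Lemma Madj_id : Madj Mid = Mid.
Proof. mring. Qed.

Lemma Mdet_id : Mdet Mid = C1.
Proof. unfold Mdet; simpl. cring. Qed.

Lemma Mdet_scal c M : Mdet (Mscal c M) = Cmul (Cmul c c) (Mdet M).
Proof. unfold Mdet; simpl. cring. Qed.

Lemma Madj_mul_l M : Mdet M = C1 -> Mmul (Madj M) M = Mid.
Proof. intro H. transitivity (Mscal (Mdet M) Mid); [mring| rewrite H; mring]. Qed.

Lemma Madj_mul_r M : Mdet M = C1 -> Mmul M (Madj M) = Mid.
Proof. intro H. transitivity (Mscal (Mdet M) Mid); [mring| rewrite H; mring]. Qed.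

Lemma Minv_det1 M : Mdet M = C1 -> Minv M = Madj M.
Proof. intro H. unfold Minv. rewrite H, Cinv_C1. mring. Qed.

Lemma Mmul_Minv_cancel_l X Y : Mdet X = C1 -> Mmul (Minv X) (Mmul X Y) = Y.
Proof. intro H. rewrite Minv_det1, <- Mmul_assoc, Madj_mul_l by auto. apply Mmul_1_l. Qed.

Lemma Mmul_Madj_cancel_r X Y : Mdet Y = C1 -> Mmul (Mmul X Y) (Madj Y) = X.
Proof. intro H. rewrite Mmul_assoc, Madj_mul_r by auto. apply Mmul_1_r. Qed.

Definition S1_mseries (A : nat -> M2) (F : Cplx -> M2) : Prop :=
  S1_series (fun k => a11 (A k)) (fun l => a11 (F l)) /\
  S1_series (fun k => a12 (A k)) (fun l => a12 (F l)) /\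
  S1_series (fun k => a21 (A k)) (fun l => a21 (F l)) /\
  S1_series (fun k => a22 (A k)) (fun l => a22 (F l)).

Definition Mconv (A B : nat -> M2) (n : nat) : M2 :=
  let c (x y : M2 -> Cplx) := Cconv (fun k => x (A k)) (fun k => y (B k)) n in
  mkM2 (Cadd (c a11 a11) (c a12 a21)) (Cadd (c a11 a12) (c a12 a22))
       (Cadd (c a21 a11) (c a22 a21)) (Cadd (c a21 a12) (c a22 a22)).

Lemma Mconv_0 A B : Mconv A B 0 = Mmul (A 0%nat) (B 0%nat).
Proof. unfold Mconv, Cconv. mring. Qed.

Lemma S1_mseries_mul A B F G : S1_mseries A F -> S1_mseries B G ->
  S1_mseries (Mconv A B) (fun l => Mmul (F l) (G l)).
Proof.
  intros (H1 & H2 & H3 & H4) (G1 & G2 & G3 & G4).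
  split; [|split; [|split]]; simpl; apply S1_series_add; apply S1_series_mul; auto.
Qed.

Lemma S1_mseries_adj A F : S1_mseries A F ->
  S1_mseries (fun k => Madj (A k)) (fun l => Madj (F l)).
Proof.
  intros (H1 & H2 & H3 & H4). split; [|split; [|split]]; simpl; auto; apply S1_series_opp; auto.
Qed.

Lemma S1_mseries_ext A F G : S1_mseries A F -> (forall l, onS1 l -> F l = G l) -> S1_mseries A G.
Proof.
  intros (H1 & H2 & H3 & H4) E.
  split; [|split; [|split]]; (eapply S1_series_ext; [eassumption|]); intros l Hl; cbv beta; rewrite E; auto.
Qed.

Definition Mconst_coef (M : M2) (k : nat) : M2 :=
  mkM2 (Cconst_coef (a11 M) k) (Cconst_coef (a12 M) k)
       (Cconst_coef (a21 M) k) (Cconst_coef (a22 M) k).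

Lemma S1_mseries_const M : S1_mseries (Mconst_coef M) (fun _ => M).
Proof. split; [|split; [|split]]; apply S1_series_const. Qed.

Lemma S1_mseries_conj_const A B F G : S1_mseries A F -> S1_mseries B G ->
  (forall l, onS1 l -> F l = G (Cconj l)) -> forall l, onS1 l -> F l = A 0%nat.
Proof.
  intros (H1 & H2 & H3 & H4) (G1 & G2 & G3 & G4) E l Hl.
  apply M2_ext;
    [apply (S1_series_conj_const _ _ _ _ H1 G1)| apply (S1_series_conj_const _ _ _ _ H2 G2)
    |apply (S1_series_conj_const _ _ _ _ H3 G3)| apply (S1_series_conj_const _ _ _ _ H4 G4)];
    auto; intros; cbv beta; rewrite E; auto.
Qed.

Definition plus_loop (P : Cplx -> M2) : Prop := exists A, S1_mseries A P.
Definition plus_loop_normed (P : Cplx -> M2) : Prop := exists A, S1_mseries A P /\ A 0%nat = Mid.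
(* On the circle 1/l = conj l, so a series in 1/l is a series in conj l. *)
Definition minus_loop (Q : Cplx -> M2) : Prop := plus_loop (fun l => Q (Cconj l)).
Definition minus_loop_normed (Q : Cplx -> M2) : Prop := plus_loop_normed (fun l => Q (Cconj l)).

Lemma plus_loop_normed_plus_loop P : plus_loop_normed P -> plus_loop P.
Proof. intros [A [H _]]; exists A; auto. Qed.

Lemma plus_loop_mul P Q : plus_loop P -> plus_loop Q -> plus_loop (fun l => Mmul (P l) (Q l)).
Proof. intros [A HA] [B HB]; exists (Mconv A B); apply S1_mseries_mul; auto. Qed.

Lemma plus_loop_normed_mul P Q : plus_loop_normed P -> plus_loop_normed Q ->
  plus_loop_normed (fun l => Mmul (P l) (Q l)).
Proof.
  intros [A [HA EA]] [B [HB EB]]; exists (Mconv A B); split; [apply S1_mseries_mul; auto|].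
  rewrite Mconv_0, EA, EB. apply Mmul_1_l.
Qed.

Lemma plus_loop_adj P : plus_loop P -> plus_loop (fun l => Madj (P l)).
Proof. intros [A HA]; exists (fun k => Madj (A k)); apply S1_mseries_adj; auto. Qed.

Lemma plus_loop_normed_adj P : plus_loop_normed P -> plus_loop_normed (fun l => Madj (P l)).
Proof.
  intros [A [HA EA]]; exists (fun k => Madj (A k)); split; [apply S1_mseries_adj; auto|].
  rewrite EA. apply Madj_id.
Qed.

Lemma plus_loop_const M : plus_loop (fun _ => M).
Proof. exists (Mconst_coef M); apply S1_mseries_const. Qed.

Lemma plus_loop_normed_id : plus_loop_normed (fun _ => Mid).
Proof. exists (Mconst_coef Mid); split; [apply S1_mseries_const| reflexivity]. Qed.

Lemma plus_loop_ext P Q : plus_loop P -> (forall l, onS1 l -> P l = Q l) -> plus_loop Q.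
Proof. intros [A HA] E; exists A; eapply S1_mseries_ext; eauto. Qed.

Lemma plus_loop_normed_ext P Q :
  plus_loop_normed P -> (forall l, onS1 l -> P l = Q l) -> plus_loop_normed Q.
Proof. intros [A [HA E0]] E; exists A; split; auto; eapply S1_mseries_ext; eauto. Qed.

Lemma minus_loop_conj P : plus_loop P -> minus_loop (fun l => P (Cconj l)).
Proof. intro H. eapply plus_loop_ext; [exact H|]. intros; rewrite Cconj_involutive; auto. Qed.

(* If P1 Q1 = P2 Q2 then P2^-1 P1 = Q2 Q1^-1 is both a plus and a minus loop,
   hence constant, and its constant term is Id. *)
Lemma birkhoff_plus_minus_unique P1 P2 Q1 Q2 :
  plus_loop_normed P1 -> plus_loop_normed P2 -> minus_loop Q1 -> minus_loop Q2 ->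
  (forall l, onS1 l -> Mdet (P2 l) = C1) -> (forall l, onS1 l -> Mdet (Q1 l) = C1) ->
  (forall l, onS1 l -> Mmul (P1 l) (Q1 l) = Mmul (P2 l) (Q2 l)) ->
  forall l, onS1 l -> P1 l = P2 l /\ Q1 l = Q2 l.
Proof.
  intros HP1 HP2 HQ1 HQ2 D2 D1 E.
  destruct (plus_loop_normed_mul _ _ (plus_loop_normed_adj _ HP2) HP1) as [A [HA EA]].
  destruct (plus_loop_mul _ _ HQ2 (plus_loop_adj _ HQ1)) as [B HB].
  assert (Hconst : forall l, onS1 l -> Mmul (Madj (P2 l)) (P1 l) = Mid).
  { intros l Hl. rewrite <- EA. apply (S1_mseries_conj_const _ _ _ _ HA HB); auto.
    intros l' Hl'. rewrite Cconj_involutive.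
    rewrite <- (Mmul_Madj_cancel_r (P1 l') (Q1 l')), E by auto.
    rewrite !Mmul_assoc, <- (Mmul_assoc (Madj (P2 l'))), Madj_mul_l, Mmul_1_l by auto.
    reflexivity. }
  intros l Hl.
  assert (EP : P1 l = P2 l).
  { rewrite <- (Mmul_1_l (P1 l)), <- (Madj_mul_r (P2 l)), Mmul_assoc, Hconst by auto.
    apply Mmul_1_r. }
  split; auto.
  rewrite <- (Mmul_1_l (Q1 l)), <- (Madj_mul_l (P1 l)), Mmul_assoc, E by (rewrite ?EP; auto).
  rewrite EP, <- Mmul_assoc, Madj_mul_l by auto. apply Mmul_1_l.
Qed.

Lemma birkhoff_minus_plus_unique A1 A2 B1 B2 :
  minus_loop_normed A1 -> minus_loop_normed A2 -> plus_loop B1 -> plus_loop B2 ->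
  (forall l, onS1 l -> Mdet (A2 l) = C1) -> (forall l, onS1 l -> Mdet (B1 l) = C1) ->
  (forall l, onS1 l -> Mmul (A1 l) (B1 l) = Mmul (A2 l) (B2 l)) ->
  forall l, onS1 l -> A1 l = A2 l /\ B1 l = B2 l.
Proof.
  intros H1 H2 H3 H4 D2 D1 E l Hl.
  pose proof (birkhoff_plus_minus_unique
    (fun l => A1 (Cconj l)) (fun l => A2 (Cconj l)) (fun l => B1 (Cconj l)) (fun l => B2 (Cconj l))
    H1 H2 (minus_loop_conj _ H3) (minus_loop_conj _ H4)
    ltac:(intros; apply D2, onS1_conj; auto) ltac:(intros; apply D1, onS1_conj; auto)
    ltac:(intros; apply E, onS1_conj; auto) (Cconj l) (onS1_conj _ Hl)) as R.
  cbv beta in R. rewrite Cconj_involutive in R. exact R.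
Qed.

Lemma plus_loop_normed_Z_chain (X Y : Z -> Cplx -> M2) :
  plus_loop_normed (X 0%Z) -> (forall k, plus_loop_normed (Y k)) ->
  (forall k l, onS1 l -> Mdet (Y k l) = C1) ->
  (forall k l, onS1 l -> X (k + 1)%Z l = Mmul (X k l) (Y k l)) ->
  forall k, plus_loop_normed (X k).
Proof.
  intros H0 HY DY HX k. induction k as [|k IH|k IH] using Z.peano_ind; auto.
  - eapply plus_loop_normed_ext; [apply plus_loop_normed_mul; [exact IH| apply HY]|].
    intros l Hl. symmetry. apply HX, Hl.
  - eapply plus_loop_normed_ext;
      [apply plus_loop_normed_mul; [exact IH| apply plus_loop_normed_adj, (HY (Z.pred k))]|].
    intros l Hl. cbv beta.
    replace (X k l) with (X (Z.pred k + 1)%Z l) by (f_equal; lia).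
    rewrite HX by auto. apply Mmul_Madj_cancel_r, DY, Hl.
Qed.

Lemma minus_loop_normed_Z_chain (X Y : Z -> Cplx -> M2) :
  minus_loop_normed (X 0%Z) -> (forall k, minus_loop_normed (Y k)) ->
  (forall k l, onS1 l -> Mdet (Y k l) = C1) ->
  (forall k l, onS1 l -> X (k + 1)%Z l = Mmul (X k l) (Y k l)) ->
  forall k, minus_loop_normed (X k).
Proof.
  intros H0 HY DY HX.
  apply (plus_loop_normed_Z_chain (fun k l => X k (Cconj l)) (fun k l => Y k (Cconj l))); auto;
    intros; [apply DY| apply HX]; apply onS1_conj; auto.
Qed.

(** * The power series of 1 / sqrt (1 + r z^2) *)

Lemma Rabs_le_inv x y : Rabs x <= y -> - y <= x <= y.
Proof. intro H. destruct (Rcase_abs x); [rewrite Rabs_left in H|rewrite Rabs_right in H]; lra. Qed.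

Lemma Rabs_Re_le_Cnorm z : Rabs (Re z) <= Cnorm z.
Proof. unfold Cnorm, Cnorm2. rewrite <- sqrt_Rsqr_abs. apply sqrt_le_1_alt. unfold Rsqr. nra. Qed.

Lemma Rabs_Im_le_Cnorm z : Rabs (Im z) <= Cnorm z.
Proof. unfold Cnorm, Cnorm2. rewrite <- sqrt_Rsqr_abs. apply sqrt_le_1_alt. unfold Rsqr. nra. Qed.

Lemma Csqrt_sq z : Cmul (Csqrt z) (Csqrt z) = z.
Proof.
  pose proof (Rabs_le_inv _ _ (Rabs_Re_le_Cnorm z)).
  assert (Hs : Cnorm z * Cnorm z = Re z * Re z + Im z * Im z)
    by (unfold Cnorm, Cnorm2; apply sqrt_sqrt; nra).
  assert (H1 : 0 <= (Cnorm z + Re z) / 2) by lra.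
  assert (H2 : 0 <= (Cnorm z - Re z) / 2) by lra.
  pose proof (sqrt_sqrt _ H1). pose proof (sqrt_sqrt _ H2).
  apply Cplx_ext; unfold Csqrt; simpl.
  - destruct (Rlt_dec (Im z) 0); nra.
  - assert (E : sqrt ((Cnorm z + Re z) / 2) * sqrt ((Cnorm z - Re z) / 2) = Rabs (Im z) / 2).
    { rewrite <- sqrt_mult by auto.
      replace ((Cnorm z + Re z) / 2 * ((Cnorm z - Re z) / 2)) with (Rsqr (Im z / 2))
        by (unfold Rsqr; nra).
      rewrite sqrt_Rsqr_abs. unfold Rdiv. rewrite Rabs_mult, (Rabs_right (/2)) by lra. reflexivity. }
    destruct (Rlt_dec (Im z) 0).
    + rewrite Rabs_left in E by auto. nra.
    + rewrite Rabs_right in E by lra. nra.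
Qed.

Lemma Csqrt_Re_pos z : 0 < Re z -> 0 < Re (Csqrt z).
Proof.
  intro H. unfold Csqrt; simpl. apply sqrt_lt_R0.
  pose proof (Rabs_le_inv _ _ (Rabs_Re_le_Cnorm z)). lra.
Qed.

Lemma Csqrt_neq0 z : 0 < Re z -> Csqrt z <> C0.
Proof. intros H E. pose proof (Csqrt_Re_pos z H) as H'. rewrite E in H'. simpl in H'. lra. Qed.

Lemma Csqrt_unique s z : Cmul s s = z -> 0 < Re s -> s = Csqrt z.
Proof.
  intros H Hs. set (t := Csqrt z).
  assert (Ht : Cmul t t = z) by apply Csqrt_sq.
  assert (Hr : 0 <= Re t) by apply sqrt_pos.
  clearbody t.
  assert (E : Cmul (Cadd s (Copp t)) (Cadd s t) = C0).
  { transitivity (Cadd (Cmul s s) (Copp (Cmul t t))); [cring|]. rewrite H, Ht. cring. }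
  assert (D : Cadd s t <> C0).
  { intro E0. assert (Re (Cadd s t) = 0) by (rewrite E0; reflexivity). simpl in *. lra. }
  pose proof (Cmul_eq0_l _ _ E D) as Z.
  apply Cplx_ext; [assert (Re (Cadd s (Copp t)) = 0) by (rewrite Z; reflexivity)
                  |assert (Im (Cadd s (Copp t)) = 0) by (rewrite Z; reflexivity)]; simpl in *; lra.
Qed.

Fixpoint binom_half (k : nat) : R :=
  match k with O => 1 | S j => binom_half j * (/2 - INR j) / INR (S j) end.

Lemma binom_half_S j : INR (S j) * binom_half (S j) = (/2 - INR j) * binom_half j.
Proof.
  change (binom_half (S j)) with (binom_half j * (/2 - INR j) / INR (S j)).
  field. apply not_0_INR; lia.
Qed.

(* All coefficients after the first are alternating in sign, which makes the
   partial sums of their absolute values telescope. *)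
Lemma sum_abs_binom_half k : (1 <= k)%nat ->
  sum_f_R0 (fun j => Rabs (binom_half j)) k = 2 - (2 * INR k - 1) * Rabs (binom_half k).
Proof.
  intro Hk. induction k; [lia|].
  destruct k.
  - simpl. rewrite Rmult_1_l, Rabs_R1. replace (1 * (/ 2 - 0) / 1) with (/2) by field.
    rewrite Rabs_right by lra. lra.
  - rewrite tech5, IHk by lia.
    assert (E : Rabs (binom_half (S (S k))) =
                Rabs (binom_half (S k)) * ((INR (S k) - /2) / INR (S (S k)))).
    { change (binom_half (S (S k))) with (binom_half (S k) * (/2 - INR (S k)) / INR (S (S k))).
      unfold Rdiv. rewrite (Rabs_mult (binom_half (S k) * _)), (Rabs_mult (binom_half (S k))).
      rewrite (Rabs_left (/2 - _)) by (rewrite S_INR; pose proof (pos_INR k); lra).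
      rewrite (Rabs_right (/ _)) by (apply Rle_ge, Rlt_le, Rinv_0_lt_compat, lt_0_INR; lia).
      ring. }
    rewrite E, !S_INR. field. rewrite <- !S_INR. apply not_0_INR; lia.
Qed.

Lemma sum_abs_binom_half_le n : sum_f_R0 (fun j => Rabs (binom_half j)) n <= 2.
Proof.
  destruct n; [simpl; rewrite Rabs_R1; lra|].
  rewrite sum_abs_binom_half by lia. pose proof (Rabs_pos (binom_half (S n))).
  assert (1 <= INR (S n)) by (apply (le_INR 1); lia). nra.
Qed.

Lemma abs_binom_half_le k : Rabs (binom_half k) <= 2.
Proof.
  destruct k; [simpl; rewrite Rabs_R1; lra|].
  pose proof (sum_abs_binom_half_le (S k)) as H. rewrite tech5 in H.
  assert (0 <= sum_f_R0 (fun j => Rabs (binom_half j)) k) by (apply cond_pos_sum; intro; apply Rabs_pos).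
  lra.
Qed.

Lemma sum_f_R0_reflect (f : nat -> R) n : sum_f_R0 f n = sum_f_R0 (fun j => f (n - j)%nat) n.
Proof.
  induction n; [reflexivity|].
  rewrite tech5, (decomp_sum (fun j => f (S n - j)%nat) (S n)) by lia.
  simpl pred. replace (S n - 0)%nat with (S n) by lia.
  rewrite IHn, Rplus_comm. reflexivity.
Qed.

(* Symmetry j <-> k - j of the Cauchy square distributes the weight k evenly. *)
Lemma sum_conv_sq_weight (s : nat -> R) k :
  INR k * sum_f_R0 (fun j => s j * s (k - j)%nat) k =
  2 * sum_f_R0 (fun j => INR j * s j * s (k - j)%nat) k.
Proof.
  transitivity (sum_f_R0 (fun j => INR j * s j * s (k - j)%nat) k +
                sum_f_R0 (fun j => INR (k - j)%nat * s j * s (k - j)%nat) k).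
  - rewrite <- plus_sum, scal_sum. apply sum_eq. intros i Hi. rewrite minus_INR by auto. ring.
  - rewrite (sum_f_R0_reflect (fun j => INR (k - j)%nat * s j * s (k - j)%nat)).
    rewrite (sum_eq (fun j => INR (k - (k - j))%nat * s (k - j)%nat * s (k - (k - j))%nat)
                    (fun j => INR j * s j * s (k - j)%nat))
      by (intros i Hi; replace (k - (k - i))%nat with i by lia; ring).
    ring.
Qed.

Definition binom_half_sq (k : nat) : R := sum_f_R0 (fun j => binom_half j * binom_half (k - j)%nat) k.

Lemma binom_half_sq_S k : INR (S k) * binom_half_sq (S k) = (1 - INR k) * binom_half_sq k.
Proof.
  unfold binom_half_sq. rewrite sum_conv_sq_weight.
  assert (Hshift : sum_f_R0 (fun j => INR j * binom_half j * binom_half (S k - j)%nat) (S k) =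
                   sum_f_R0 (fun i => (/2 - INR i) * binom_half i * binom_half (k - i)%nat) k).
  { rewrite decomp_sum by lia. simpl pred. simpl INR at 1. rewrite !Rmult_0_l, Rplus_0_l.
    apply sum_eq. intros i Hi. rewrite <- (binom_half_S i).
    replace (S k - S i)%nat with (k - i)%nat by lia. ring. }
  rewrite Hshift.
  rewrite (sum_eq _ (fun i => /2 * (binom_half i * binom_half (k - i)%nat)
                              - INR i * binom_half i * binom_half (k - i)%nat)) by (intros; ring).
  rewrite minus_sum.
  rewrite (sum_eq _ (fun i => binom_half i * binom_half (k - i)%nat * /2)) by (intros; ring).
  rewrite <- (scal_sum _ k (/2)).
  pose proof (sum_conv_sq_weight binom_half k) as Hw.
  set (S := sum_f_R0 (fun j => binom_half j * binom_half (k - j)%nat) k) in *.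
  replace ((1 - INR k) * S) with (S - INR k * S) by ring. rewrite Hw. field.
Qed.

(* The Cauchy square of the binomial series of sqrt(1 + w) is 1 + w. *)
Lemma binom_half_sq_ge2 k : (2 <= k)%nat -> binom_half_sq k = 0.
Proof.
  intro H. induction k; [lia|].
  pose proof (binom_half_sq_S k) as E.
  destruct (Nat.eq_dec k 1) as [->|Hk].
  - unfold binom_half_sq in E at 2; simpl in E. apply (Rmult_eq_reg_l (1 + 1)); [lra|]. lra.
  - rewrite IHk in E by lia. apply (Rmult_eq_reg_l (INR (S k))); [|apply not_0_INR; lia]. lra.
Qed.

Lemma Cpow_opp w j : Cpow (Copp w) j = Cmul (RtoC ((-1) ^ j)) (Cpow w j).
Proof. induction j; [cring| simpl Cpow; rewrite IHj; simpl pow; cring]. Qed.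

Section Inverse_square_root.

Variable r : R.
Hypothesis Hr : 0 <= r < 1.
Variable w : Cplx.
Hypothesis Hw : Cnorm2 w = r * r.

Definition sqrt_term (k : nat) : Cplx := Cmul (RtoC (binom_half k)) (Cpow w k).

Lemma Cabs_summable_sqrt_term : Cabs_summable sqrt_term.
Proof.
  apply (Cabs_summable_geom _ r 4); auto. intro k. unfold sqrt_term.
  rewrite Cnorm1_RtoC_mul. pose proof (abs_binom_half_le k).
  pose proof (Cnorm1_pow w r k ltac:(lra) Hw). pose proof (Rabs_pos (binom_half k)).
  pose proof (Cnorm1_ge0 (Cpow w k)). nra.
Qed.

Lemma sqrt_series_sq s : Cseries_cv sqrt_term s -> Cmul s s = Cadd C1 w.
Proof.
  intro Hs. apply (Cseries_unique _ _ _
    (Cseries_Cconv _ _ _ _ Hs Hs Cabs_summable_sqrt_term Cabs_summable_sqrt_term)).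
  replace (Cadd C1 w) with (Csum (Cconv sqrt_term sqrt_term) 1)
    by (apply Cplx_ext; unfold sqrt_term, Cconv; simpl; field).
  apply Cseries_finite. intros n Hn.
  transitivity (Cmul (RtoC (binom_half_sq n)) (Cpow w n)).
  - unfold binom_half_sq. rewrite <- Csum_RtoC, <- Csum_mul_r. apply Csum_ext. intros k Hk.
    unfold sqrt_term. replace (Cpow w n) with (Cpow w (k + (n - k))) by (f_equal; lia).
    rewrite Cpow_add. cring.
  - rewrite binom_half_sq_ge2 by lia. cring.
Qed.

(* The series lands on the principal branch of the square root. *)
Lemma sqrt_series_Re_ge s : Cseries_cv sqrt_term s -> 1 - r <= Re s.
Proof.
  intros [H1 _].
  assert (B : forall n, 1 + r - r * sum_f_R0 (fun j => Rabs (binom_half j)) n <=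
                        sum_f_R0 (fun k => Re (sqrt_term k)) n).
  { induction n; [unfold sqrt_term; simpl; rewrite Rabs_R1; lra|].
    rewrite !tech5.
    replace (Re (sqrt_term (S n))) with (binom_half (S n) * Re (Cpow w (S n)))
      by (unfold sqrt_term, Cmul, RtoC; cbn [Re Im]; ring).
    destruct (Cpow_parts_bound w r (S n) ltac:(lra) Hw) as [Hre _].
    apply Rabs_le_inv in Hre.
    assert (r ^ S n <= r).
    { simpl. pose proof (pow_le r n ltac:(lra)).
      pose proof (pow_incr r 1 n ltac:(lra)) as H1n. rewrite pow1 in H1n. nra. }
    assert (- Rabs (binom_half (S n)) * r <= binom_half (S n) * Re (Cpow w (S n))).
    { pose proof (Rabs_pos (binom_half (S n))). destruct (Rcase_abs (binom_half (S n))).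
      - rewrite Rabs_left by auto. nra.
      - rewrite Rabs_right by auto. nra. }
    nra. }
  apply (Un_cv_ge _ _ 0 _ H1). intros n _. specialize (B n).
  pose proof (sum_abs_binom_half_le n). nra.
Qed.

Lemma sqrt_series_Csqrt s : Cseries_cv sqrt_term s -> s = Csqrt (Cadd C1 w).
Proof.
  intro H. apply Csqrt_unique; [apply sqrt_series_sq; auto|].
  pose proof (sqrt_series_Re_ge s H). lra.
Qed.

Lemma Re_1_plus_w_pos : 0 < Re (Cadd C1 w).
Proof.
  destruct (Cpow_parts_bound w r 1 ltac:(lra) Hw) as [H _].
  replace (Cpow w 1) with w in H by cring. rewrite pow_1 in H.
  apply Rabs_le_inv in H. simpl. lra.
Qed.

Lemma Cseries_geom_opp : Cseries_cv (Cpow (Copp w)) (Cinv (Cadd C1 w)).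
Proof.
  set (c := Cinv (Cadd C1 w)).
  assert (Hc : Cmul (Cadd C1 w) c = C1).
  { apply Cmul_inv_r. intro E. pose proof Re_1_plus_w_pos as H. rewrite E in H. simpl in H. lra. }
  assert (Hr' : Cnorm2 (Copp w) = r * r) by (rewrite <- Hw; unfold Cnorm2; simpl; ring).
  apply Cseries_Cseq_cv.
  eapply Cseq_cv_ext with (u := fun n => Cmul c (Cadd C1 (Copp (Cpow (Copp w) (S n))))).
  - intro n. symmetry.
    transitivity (Cmul (Cmul (Csum (Cpow (Copp w)) n) (Cadd (Copp w) (Copp C1))) (Copp c)).
    + transitivity (Cmul (Csum (Cpow (Copp w)) n) (Cmul (Cadd C1 w) c)); [rewrite Hc|]; cring.
    + rewrite Csum_geom. cring.
  - replace c with (Cmul c C1) at 1 by cring. apply Cseq_cv_scal.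
    assert (Z : forall eps, 0 < eps -> exists N, forall n, (n >= N)%nat -> r ^ S n < eps).
    { intros eps He. destruct (pow_lt_1_zero r ltac:(rewrite Rabs_right; lra) eps He) as [N HN].
      exists N. intros n Hn. specialize (HN (S n) ltac:(lia)). rewrite Rabs_right in HN; auto.
      apply Rle_ge, pow_le; lra. }
    split; intros eps He; destruct (Z eps He) as [N HN]; exists N; intros n Hn;
      destruct (Cpow_parts_bound (Copp w) r (S n) ltac:(lra) Hr') as [B1 B2];
      specialize (HN n Hn); unfold Rdist.
    + change (Rabs (1 + - Re (Cpow (Copp w) (S n)) - 1) < eps).
      replace (1 + - Re (Cpow (Copp w) (S n)) - 1) with (- Re (Cpow (Copp w) (S n))) by ring.
      rewrite Rabs_Ropp. lra.
    + change (Rabs (0 + - Im (Cpow (Copp w) (S n)) - 0) < eps).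
      replace (0 + - Im (Cpow (Copp w) (S n)) - 0) with (- Im (Cpow (Copp w) (S n))) by ring.
      rewrite Rabs_Ropp. lra.
Qed.

Definition inv_sqrt_coef (n : nat) : R := sum_f_R0 (fun k => binom_half k * (-1) ^ (n - k)) n.

Lemma abs_inv_sqrt_coef_le n : Rabs (inv_sqrt_coef n) <= 2.
Proof.
  unfold inv_sqrt_coef. eapply Rle_trans; [apply sum_f_R0_triangle|].
  eapply Rle_trans; [|apply (sum_abs_binom_half_le n)]. apply sum_Rle. intros k _.
  rewrite Rabs_mult, pow_1_abs. lra.
Qed.

(* 1/sqrt(1+w) = sqrt(1+w) * 1/(1+w), multiplied as power series in w. *)
Lemma inv_sqrt_series :
  Cseries_cv (fun n => Cmul (RtoC (inv_sqrt_coef n)) (Cpow w n)) (Cinv (Csqrt (Cadd C1 w))).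
Proof.
  destruct (Cabs_summable_cv _ Cabs_summable_sqrt_term) as [s Hs].
  rewrite <- (sqrt_series_Csqrt s Hs).
  replace (Cinv s) with (Cmul s (Cinv (Cadd C1 w))).
  - eapply Cseries_ext; [|exact (Cseries_Cconv _ _ _ _ Hs Cseries_geom_opp Cabs_summable_sqrt_term
                                   (Cabs_summable_geom _ r 2 Hr (fun k => Cnorm1_pow (Copp w) r k ltac:(lra)
                                     ltac:(rewrite <- Hw; unfold Cnorm2; simpl; ring))))].
    intro n. unfold Cconv, inv_sqrt_coef. rewrite <- Csum_RtoC, <- Csum_mul_r.
    apply Csum_ext. intros k Hk. unfold sqrt_term.
    replace (Cpow w n) with (Cpow w (k + (n - k))) by (f_equal; lia).
    rewrite Cpow_add, Cpow_opp. cring.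
  - apply Cinv_unique. transitivity (Cmul (Cmul s s) (Cinv (Cadd C1 w))); [cring|].
    rewrite sqrt_series_sq by auto. apply Cmul_inv_r.
    intro E. pose proof Re_1_plus_w_pos as H. rewrite E in H. simpl in H. lra.
Qed.

End Inverse_square_root.

Definition even_spread (c : nat -> Cplx) (m : nat) : Cplx :=
  if Nat.even m then c (Nat.div2 m) else C0.

Lemma sum_even_spread_aux (x : nat -> R) n :
  sum_f_R0 (fun m => if Nat.even m then x (Nat.div2 m) else 0) (2 * n) = sum_f_R0 x n /\
  sum_f_R0 (fun m => if Nat.even m then x (Nat.div2 m) else 0) (S (2 * n)) = sum_f_R0 x n.
Proof.
  induction n; [simpl; split; ring|].
  destruct IHn as [I1 I2].
  assert (E1 : Nat.even (2 * S n) = true) by (rewrite Nat.even_mul; reflexivity).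
  assert (E2 : Nat.even (S (2 * S n)) = false)
    by (rewrite Nat.even_succ, <- Nat.negb_even, E1; reflexivity).
  assert (D : Nat.div2 (2 * S n) = S n) by apply Nat.div2_double.
  replace (2 * S n)%nat with (S (S (2 * n))) in * by lia.
  split.
  - rewrite tech5, I2, E1, D, tech5. reflexivity.
  - rewrite tech5, tech5, I2, E1, E2, D, tech5. ring.
Qed.

Lemma sum_even_spread (x : nat -> R) m :
  sum_f_R0 (fun m => if Nat.even m then x (Nat.div2 m) else 0) m = sum_f_R0 x (Nat.div2 m).
Proof.
  destruct (Nat.Even_or_Odd m) as [[n Hn]|[n Hn]]; subst.
  - rewrite Nat.div2_double. apply sum_even_spread_aux.
  - replace (2 * n + 1)%nat with (S (2 * n)) by lia. rewrite Nat.div2_succ_double.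
    apply sum_even_spread_aux.
Qed.

Lemma Un_cv_div2 u l : Un_cv u l -> Un_cv (fun m => u (Nat.div2 m)) l.
Proof.
  intros H eps He. destruct (H eps He) as [N HN]. exists (2 * N)%nat. intros m Hm.
  apply HN. pose proof (Nat.div2_le_mono _ _ Hm) as H2. rewrite Nat.div2_double in H2. lia.
Qed.

Lemma Cseries_even_spread c L : Cseries_cv c L -> Cseries_cv (even_spread c) L.
Proof.
  intros [H1 H2].
  split; (eapply Un_cv_ext; [|apply Un_cv_div2; eassumption]); intro m; simpl;
    [rewrite <- (sum_even_spread (fun k => Re (c k)))| rewrite <- (sum_even_spread (fun k => Im (c k)))];
    apply sum_eq; intros i _; unfold even_spread; destruct (Nat.even i); reflexivity.
Qed.

Lemma ex_series_even_spread (x : nat -> R) :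
  ex_series x -> ex_series (fun m => if Nat.even m then x (Nat.div2 m) else 0).
Proof.
  intros [L HL]. exists L. apply Un_cv_is_series. apply Un_cv_is_series in HL.
  eapply Un_cv_ext; [|apply (Un_cv_div2 _ _ HL)]. intro m. simpl. rewrite sum_even_spread. reflexivity.
Qed.

Definition inv_delta_coef (r : R) : nat -> Cplx :=
  even_spread (fun n => RtoC (inv_sqrt_coef n * r ^ n)).

Lemma Cpow_scal_sq r z n : Cpow (Cmul (RtoC r) (Cmul z z)) n = Cmul (RtoC (r ^ n)) (Cpow z (2 * n)).
Proof.
  induction n; [cring|].
  replace (2 * S n)%nat with (S (S (2 * n))) by lia. simpl Cpow. rewrite IHn. simpl pow. cring.
Qed.

Lemma inv_delta_series r : 0 <= r < 1 ->
  S1_series (inv_delta_coef r) (fun z => Cinv (Csqrt (Cadd C1 (Cmul (RtoC r) (Cmul z z))))).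
Proof.
  intro Hr. split.
  - apply (Cabs_summable_le _ (fun m => if Nat.even m then 2 * r ^ (Nat.div2 m) else 0)).
    + intro m. unfold inv_delta_coef, even_spread. destruct (Nat.even m).
      * unfold Cnorm1, RtoC; simpl. rewrite Rabs_R0, Rplus_0_r, Rabs_mult.
        rewrite (Rabs_right (r ^ _)) by (apply Rle_ge, pow_le; lra).
        pose proof (abs_inv_sqrt_coef_le (Nat.div2 m)). pose proof (pow_le r (Nat.div2 m) ltac:(lra)).
        nra.
      * unfold Cnorm1; simpl; rewrite Rabs_R0; lra.
    + apply (ex_series_even_spread (fun n => 2 * r ^ n)).
      apply ex_series_R_scal, ex_series_geom. rewrite Rabs_right; lra.
  - intros z Hz.
    set (w := Cmul (RtoC r) (Cmul z z)).
    assert (Hw : Cnorm2 w = r * r).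
    { unfold w. rewrite !Cnorm2_mul, Hz. unfold Cnorm2, RtoC; simpl. ring. }
    eapply Cseries_ext; [|apply Cseries_even_spread, (inv_sqrt_series r Hr w Hw)].
    intro m. unfold even_spread, inv_delta_coef, even_spread. destruct (Nat.even m) eqn:Em.
    + unfold w. rewrite Cpow_scal_sq.
      apply Nat.even_spec in Em. destruct Em as [n Hn]. subst m. rewrite Nat.div2_double.
      apply Cplx_ext; unfold RtoC; simpl; ring.
    + cring.
Qed.

Lemma inv_delta_coef_0 r : inv_delta_coef r 0 = C1.
Proof. unfold inv_delta_coef, even_spread, inv_sqrt_coef; simpl. apply Cplx_ext; simpl; ring. Qed.

(** * Wiener loops *)

Lemma Cnorm1_le_Cnorm z : Cnorm1 z <= 2 * Cnorm z.
Proof. unfold Cnorm1. pose proof (Rabs_Re_le_Cnorm z). pose proof (Rabs_Im_le_Cnorm z). lra. Qed.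

Lemma Cpowz_of_nat l n : Cpowz l (Z.of_nat n) = Cpow l n.
Proof.
  unfold Cpowz. destruct (0 <=? Z.of_nat n)%Z eqn:E; [rewrite Nat2Z.id; reflexivity|].
  apply Z.leb_gt in E. lia.
Qed.

Lemma Cpowz_opp_of_nat l n : onS1 l -> (1 <= n)%nat -> Cpowz l (- Z.of_nat n) = Cpow (Cconj l) n.
Proof.
  intros Hl Hn. unfold Cpowz. destruct (0 <=? - Z.of_nat n)%Z eqn:E; [apply Z.leb_le in E; lia|].
  rewrite Z.opp_involutive, Nat2Z.id, Cinv_S1, Cpow_conj by (apply onS1_pow; auto).
  reflexivity.
Qed.

Lemma Cabs_summable_wiener c k0 : abs_summable_Z c ->
  (forall n, Cnorm1 (c (k0 n)) <= 2 * (Cnorm (c (Z.of_nat n)) + Cnorm (c (- Z.of_nat n)%Z))) ->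
  Cabs_summable (fun n => c (k0 n)).
Proof.
  intros [L HL] Hb. apply (Cabs_summable_le _ _ Hb), ex_series_R_scal.
  exists L. apply Un_cv_is_series, HL.
Qed.

Lemma wiener_S1_series_plus h c : wiener_coeffs h c -> (forall k, (k < 0)%Z -> c k = C0) ->
  S1_series (fun n => c (Z.of_nat n)) h.
Proof.
  intros [Ha Hs] Hz. split.
  - apply (Cabs_summable_wiener _ _ Ha). intro n.
    pose proof (Cnorm1_le_Cnorm (c (Z.of_nat n))). pose proof (sqrt_pos (Cnorm2 (c (- Z.of_nat n)%Z))).
    unfold Cnorm in *. lra.
  - intros l Hl. eapply Cseries_ext; [|exact (Hs l Hl)].
    intro n. unfold laurent_term. rewrite Cpowz_of_nat. destruct (Nat.eqb n 0) eqn:E; [cring|].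
    apply Nat.eqb_neq in E. rewrite (Hz (- Z.of_nat n)%Z) by lia. cring.
Qed.

(* On the circle the negative modes are powers of conj l. *)
Lemma wiener_S1_series_minus h c : wiener_coeffs h c -> (forall k, (0 < k)%Z -> c k = C0) ->
  S1_series (fun n => c (- Z.of_nat n)%Z) (fun l => h (Cconj l)).
Proof.
  intros [Ha Hs] Hz. split.
  - apply (Cabs_summable_wiener _ _ Ha). intro n.
    pose proof (Cnorm1_le_Cnorm (c (- Z.of_nat n)%Z)). pose proof (sqrt_pos (Cnorm2 (c (Z.of_nat n)))).
    unfold Cnorm in *. lra.
  - intros l Hl. eapply Cseries_ext; [|exact (Hs (Cconj l) (onS1_conj _ Hl))].
    intro n. unfold laurent_term. destruct (Nat.eqb n 0) eqn:E.
    + apply Nat.eqb_eq in E. subst n. simpl. cring.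
    + apply Nat.eqb_neq in E. rewrite (Hz (Z.of_nat n)) by lia.
      rewrite Cpowz_opp_of_nat, Cconj_involutive by (auto using onS1_conj; lia). cring.
Qed.

Lemma loop_coeffs_S1_mseries_plus g c : loop_coeffs g c ->
  (forall k, (k < 0)%Z -> c k = Mzero) -> S1_mseries (fun n => c (Z.of_nat n)) g.
Proof.
  intros (H1 & H2 & H3 & H4) Hz.
  split; [|split; [|split]];
    [apply (wiener_S1_series_plus _ _ H1)| apply (wiener_S1_series_plus _ _ H2)
    |apply (wiener_S1_series_plus _ _ H3)| apply (wiener_S1_series_plus _ _ H4)];
    intros k Hk; rewrite Hz; auto.
Qed.

Lemma loop_coeffs_S1_mseries_minus g c : loop_coeffs g c ->
  (forall k, (0 < k)%Z -> c k = Mzero) -> S1_mseries (fun n => c (- Z.of_nat n)%Z) (fun l => g (Cconj l)).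
Proof.
  intros (H1 & H2 & H3 & H4) Hz.
  split; [|split; [|split]];
    [apply (wiener_S1_series_minus _ _ H1)| apply (wiener_S1_series_minus _ _ H2)
    |apply (wiener_S1_series_minus _ _ H3)| apply (wiener_S1_series_minus _ _ H4)];
    intros k Hk; rewrite Hz; auto.
Qed.

Lemma LambdaPlusStar_plus_loop_normed g : LambdaPlusStar g -> plus_loop_normed g.
Proof.
  intros [_ [c [H [Hz H0]]]]. exists (fun n => c (Z.of_nat n)).
  split; [apply loop_coeffs_S1_mseries_plus; auto| exact H0].
Qed.

Lemma LambdaPlus_plus_loop g : LambdaPlus g -> plus_loop g.
Proof. intros [_ [c [H Hz]]]. exists (fun n => c (Z.of_nat n)). apply loop_coeffs_S1_mseries_plus; auto. Qed.

Lemma LambdaMinus_minus_loop g : LambdaMinus g -> minus_loop g.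
Proof. intros [_ [c [H Hz]]]. exists (fun n => c (- Z.of_nat n)%Z). apply loop_coeffs_S1_mseries_minus; auto. Qed.

Lemma LambdaMinusStar_minus_loop_normed g : LambdaMinusStar g -> minus_loop_normed g.
Proof.
  intros [_ [c [H [Hz H0]]]]. exists (fun n => c (- Z.of_nat n)%Z).
  split; [apply loop_coeffs_S1_mseries_minus; auto| exact H0].
Qed.

Lemma LambdaSU2_det g : LambdaSU2 g -> forall l, onS1 l -> Mdet (g l) = C1.
Proof. intros [_ H] l Hl. apply H; auto. Qed.

(** * The matrices U, V and xi *)

Lemma S1_mseries_scaled_linear f e d1 d2 x y : S1_series e f ->
  S1_mseries (fun k => mkM2 (Cmul d1 (e k)) (Cmul x (Cshift e k)) (Cmul y (Cshift e k)) (Cmul d2 (e k)))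
             (fun l => Mscal (f l) (mkM2 d1 (Cmul x l) (Cmul y l) d2)).
Proof.
  intro H. split; [|split; [|split]]; simpl;
    (eapply S1_series_ext; [apply S1_series_scal; try apply S1_series_shift; exact H|]);
    intros; cring.
Qed.

Lemma plus_loop_scaled_linear f e d1 d2 x y : S1_series e f ->
  plus_loop (fun l => Mscal (f l) (mkM2 d1 (Cmul x l) (Cmul y l) d2)).
Proof. intro H. eexists. apply S1_mseries_scaled_linear, H. Qed.

Lemma plus_loop_normed_scaled_linear f e x y : S1_series e f -> e 0%nat = C1 ->
  plus_loop_normed (fun l => Mscal (f l) (mkM2 C1 (Cmul x l) (Cmul y l) C1)).
Proof.
  intros H E. eexists. split; [apply S1_mseries_scaled_linear, H|]. simpl. rewrite E. mring.
Qed.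

Lemma sq_half_bound p : 0 < Rabs (p / 2) < 1 -> 0 <= (p / 2) ^ 2 < 1.
Proof.
  intro H. split; [apply pow2_ge_0|].
  rewrite <- Rabs_pos_eq with (x := (p / 2) ^ 2) by apply pow2_ge_0.
  rewrite <- RPow_abs. simpl. nra.
Qed.

Lemma Re_1_plus_scal_sq_pos r z : 0 <= r < 1 -> onS1 z -> 0 < Re (Cadd C1 (Cmul (RtoC r) (Cmul z z))).
Proof.
  intros Hr Hz. pose proof (onS1_mul _ _ Hz Hz) as Hzz. unfold onS1, Cnorm2 in Hzz.
  assert (- 1 <= Re (Cmul z z)) by nra.
  set (y := Cmul z z) in *. clearbody y.
  replace (Re (Cadd C1 (Cmul (RtoC r) y))) with (1 + r * Re y) by (unfold RtoC, Cadd, C1, Cmul; simpl; ring).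
  nra.
Qed.

Lemma DeltaP_sq p l : Cmul (DeltaP p l) (DeltaP p l) = Cadd C1 (Cmul (RtoC ((p / 2) ^ 2)) (Cmul l l)).
Proof. apply Csqrt_sq. Qed.

Lemma DeltaP_neq0 p l : 0 < Rabs (p / 2) < 1 -> onS1 l -> DeltaP p l <> C0.
Proof. intros Hp Hl. apply Csqrt_neq0, Re_1_plus_scal_sq_pos; auto using sq_half_bound. Qed.

Lemma DeltaM_S1 q l : onS1 l -> DeltaM q l = DeltaP q (Cconj l).
Proof.
  intro Hl. unfold DeltaM, DeltaP. rewrite Cinv_S1 by (apply onS1_mul; auto). do 3 f_equal. cring.
Qed.

Lemma Mdet_inv_DeltaP p l x y : 0 < Rabs (p / 2) < 1 -> onS1 l ->
  Cmul x y = Copp (Cmul (RtoC ((p / 2) ^ 2)) (Cmul l l)) ->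
  Mdet (Mscal (Cinv (DeltaP p l)) (mkM2 C1 x y C1)) = C1.
Proof.
  intros Hp Hl Hxy. pose proof (DeltaP_neq0 p l Hp Hl) as HD.
  rewrite Mdet_scal.
  replace (Mdet (mkM2 C1 x y C1)) with (Cmul (DeltaP p l) (DeltaP p l))
    by (rewrite DeltaP_sq; unfold Mdet; simpl; rewrite Hxy; cring).
  transitivity (Cmul (Cmul (DeltaP p l) (Cinv (DeltaP p l))) (Cmul (DeltaP p l) (Cinv (DeltaP p l))));
    [cring| rewrite Cmul_inv_r by auto; cring].
Qed.

Lemma xi_plus_det p a l : 0 < Rabs (p / 2) < 1 -> onS1 l -> Mdet (xi_plus p a l) = C1.
Proof.
  intros Hp Hl. apply Mdet_inv_DeltaP; auto.
  transitivity (Cmul (Cmul (Cexpi (- a)) (Cexpi a))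
                     (Copp (Cmul (RtoC ((p / 2) ^ 2)) (Cmul l l)))); [unfold halfI; cring|].
  rewrite Cexpi_opp_l. cring.
Qed.

Lemma xi_plus_plus_loop_normed p a : 0 < Rabs (p / 2) < 1 -> plus_loop_normed (xi_plus p a).
Proof.
  intro H. eapply plus_loop_normed_scaled_linear;
    [apply inv_delta_series, sq_half_bound, H| apply inv_delta_coef_0].
Qed.

Lemma Umat_plus_loop u p n m : 0 < Rabs (p n / 2) < 1 -> plus_loop (Umat u p n m).
Proof. intro H. eapply plus_loop_scaled_linear, inv_delta_series, sq_half_bound, H. Qed.

Lemma Vmat_conj_S1 u q n m l : onS1 l ->
  Vmat u q n m (Cconj l) =
  Mscal (Cinv (DeltaP (q m) l))
    (mkM2 C1 (Cmul (Copp (Cmul (halfI (q m)) (Cexpi ((u n (m + 1)%Z + u n m) / 2)))) l)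
             (Cmul (Copp (Cmul (halfI (q m)) (Cexpi (- (u n (m + 1)%Z + u n m) / 2)))) l) C1).
Proof.
  intro Hl. unfold Vmat.
  rewrite DeltaM_S1, Cconj_involutive, (Cinv_S1 (Cconj l)), Cconj_involutive by auto using onS1_conj.
  mring.
Qed.

Lemma Vmat_minus_loop_normed u q n m : 0 < Rabs (q m / 2) < 1 -> minus_loop_normed (Vmat u q n m).
Proof.
  intro H. eapply plus_loop_normed_ext;
    [eapply plus_loop_normed_scaled_linear; [apply inv_delta_series, sq_half_bound, H| apply inv_delta_coef_0]|].
  intros l Hl. symmetry. apply Vmat_conj_S1, Hl.
Qed.

Lemma Vmat_det u q n m l : 0 < Rabs (q m / 2) < 1 -> onS1 l -> Mdet (Vmat u q n m l) = C1.
Proof.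
  intros Hq Hl. rewrite <- (Cconj_involutive l), Vmat_conj_S1 by apply onS1_conj, Hl.
  apply Mdet_inv_DeltaP; auto using onS1_conj.
  set (t := (u n (m + 1)%Z + u n m) / 2).
  replace (- (u n (m + 1)%Z + u n m) / 2) with (- t) by (unfold t; field).
  transitivity (Cmul (Cmul (Cexpi t) (Cexpi (- t)))
                     (Copp (Cmul (RtoC ((q m / 2) ^ 2)) (Cmul (Cconj l) (Cconj l))))); [unfold halfI; cring|].
  rewrite Cexpi_opp_r. cring.
Qed.

Definition phase_mat (t : R) : M2 := mkM2 (Cexpi (- t)) C0 C0 (Cexpi t).

Lemma phase_mat_mul s t : Mmul (phase_mat s) (phase_mat t) = phase_mat (s + t).
Proof.
  unfold phase_mat. apply M2_ext; simpl; try cring.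
  - transitivity (Cmul (Cexpi (- s)) (Cexpi (- t))); [cring|]. rewrite Cexpi_add. f_equal; ring.
  - transitivity (Cmul (Cexpi s) (Cexpi t)); [cring|]. apply Cexpi_add.
Qed.

Lemma phase_mat_0 : phase_mat 0 = Mid.
Proof. unfold phase_mat. rewrite Ropp_0, Cexpi_0. reflexivity. Qed.

Lemma phase_mat_det t : Mdet (phase_mat t) = C1.
Proof. unfold Mdet, phase_mat; simpl. transitivity (Cmul (Cexpi (- t)) (Cexpi t)); [cring|]. apply Cexpi_opp_l. Qed.

Lemma phase_mat_opp_r t : Mmul (phase_mat t) (phase_mat (- t)) = Mid.
Proof. rewrite phase_mat_mul, Rplus_opp_r. apply phase_mat_0. Qed.

Lemma phase_mat_conj a b f x y :
  Mmul (Mmul (phase_mat a) (Mscal f (mkM2 C1 x y C1))) (phase_mat b) =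
  Mscal f (mkM2 (Cexpi (- (a + b))) (Cmul (Cexpi (b - a)) x) (Cmul (Cexpi (a - b)) y) (Cexpi (a + b))).
Proof.
  unfold phase_mat. apply M2_ext; simpl.
  - transitivity (Cmul f (Cmul (Cexpi (- a)) (Cexpi (- b)))); [cring|].
    rewrite Cexpi_add. do 3 f_equal. ring.
  - transitivity (Cmul f (Cmul (Cmul (Cexpi (- a)) (Cexpi b)) x)); [cring|].
    rewrite Cexpi_add. replace (- a + b) with (b - a) by ring. cring.
  - transitivity (Cmul f (Cmul (Cmul (Cexpi a) (Cexpi (- b))) y)); [cring|].
    rewrite Cexpi_add. replace (a + - b) with (a - b) by ring. cring.
  - transitivity (Cmul f (Cmul (Cexpi a) (Cexpi b))); [cring|]. rewrite Cexpi_add. cring.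
Qed.

Definition gauge (u : Z -> Z -> R) (n : Z) : R := (u n 0%Z - u 0%Z 0%Z) / 2.

(* alpha n is exactly the phase left in U(n,0) after gauging by gauge n and gauge (n+1). *)
Lemma Umat_axis u p n l :
  Umat u p n 0%Z l =
  Mmul (Mmul (phase_mat (- gauge u n)) (xi_plus (p n) (alpha u n) l)) (phase_mat (gauge u (n + 1)%Z)).
Proof.
  unfold xi_plus. rewrite phase_mat_conj. unfold Umat. f_equal.
  assert (Hphase : forall s, s = 0 -> forall z, z = Cmul (Cexpi s) z)
    by (intros s -> z; rewrite Cexpi_0; cring).
  apply M2_ext; simpl.
  - f_equal. unfold gauge. field.
  - transitivity (Cmul (Cmul (Cexpi (gauge u (n + 1) - - gauge u n)) (Cexpi (- alpha u n)))
                       (Cmul (halfI (p n)) l)); [|cring].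
    rewrite Cexpi_add. apply Hphase. unfold gauge, alpha. field.
  - transitivity (Cmul (Cmul (Cexpi (- gauge u n - gauge u (n + 1))) (Cexpi (alpha u n)))
                       (Cmul (halfI (p n)) l)); [|cring].
    rewrite Cexpi_add. apply Hphase. unfold gauge, alpha. field.
  - f_equal. unfold gauge. field.
Qed.

Lemma Vmat_axis u q m l : Vmat u q 0%Z m l = xi_minus (q m) (beta u m) l.
Proof.
  unfold Vmat, xi_minus, beta. f_equal. f_equal; do 4 f_equal; field.
Qed.

(** * Birkhoff factors of the discrete frame *)

Lemma Z_step_const {A} (f : Z -> A) : (forall k, f (k + 1)%Z = f k) -> forall k, f k = f 0%Z.
Proof.
  intros H k. induction k as [|k IH|k IH] using Z.peano_ind; auto.
  - unfold Z.succ. rewrite H. exact IH.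
  - rewrite <- IH, <- (H (Z.pred k)). f_equal. lia.
Qed.

Section Discrete_frame.

Variables (u : Z -> Z -> R) (p q : Z -> R).
Hypothesis hp : forall n, 0 < Rabs (p n / 2) < 1.
Hypothesis hq : forall m, 0 < Rabs (q m / 2) < 1.
Variable F : Z -> Z -> Cplx -> M2.
Hypothesis hF : discrete_extended_frame F u p q.
Variables Fp Fm Gm Gp : Z -> Z -> Cplx -> M2.
Hypothesis hFp : forall n m, LambdaPlusStar (Fp n m).
Hypothesis hFm : forall n m, LambdaMinus (Fm n m).
Hypothesis hGm : forall n m, LambdaMinusStar (Gm n m).
Hypothesis hGp : forall n m, LambdaPlus (Gp n m).
Hypothesis hFdec : forall n m l, onS1 l -> F n m l = Mmul (Fp n m l) (Fm n m l).
Hypothesis hGdec : forall n m l, onS1 l -> F n m l = Mmul (Gm n m l) (Gp n m l).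

Lemma frame_origin l : onS1 l -> F 0%Z 0%Z l = Mid.
Proof. apply hF. Qed.

Lemma frame_step_n n m l : onS1 l -> F (n + 1)%Z m l = Mmul (F n m l) (Umat u p n m l).
Proof. apply hF. Qed.

Lemma frame_step_m n m l : onS1 l -> F n (m + 1)%Z l = Mmul (F n m l) (Vmat u q n m l).
Proof. apply hF. Qed.

Lemma frame_det n m l : onS1 l -> Mdet (F n m l) = C1.
Proof. apply LambdaSU2_det, hF. Qed.

Lemma Fp_det n m l : onS1 l -> Mdet (Fp n m l) = C1.
Proof. apply LambdaSU2_det, hFp. Qed.

Lemma Fm_det n m l : onS1 l -> Mdet (Fm n m l) = C1.
Proof. apply LambdaSU2_det, hFm. Qed.

Lemma Gm_det n m l : onS1 l -> Mdet (Gm n m l) = C1.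
Proof. apply LambdaSU2_det, hGm. Qed.

Lemma Gp_det n m l : onS1 l -> Mdet (Gp n m l) = C1.
Proof. apply LambdaSU2_det, hGp. Qed.

(* F(n,m+1) = F+(n,m) (F-(n,m) V(n,m)) with V a minus loop. *)
Lemma Fp_succ_m n m l : onS1 l -> Fp n (m + 1)%Z l = Fp n m l.
Proof.
  intro Hl. apply (birkhoff_plus_minus_unique (Fp n (m + 1)%Z) (Fp n m) (Fm n (m + 1)%Z)
                     (fun l => Mmul (Fm n m l) (Vmat u q n m l)));
    auto using LambdaPlusStar_plus_loop_normed, LambdaMinus_minus_loop, Fp_det, Fm_det.
  - apply (plus_loop_mul (fun l => Fm n m (Cconj l))); [apply LambdaMinus_minus_loop, hFm|].
    apply plus_loop_normed_plus_loop, Vmat_minus_loop_normed, hq.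
  - intros l' Hl'. rewrite <- hFdec, frame_step_m, hFdec by auto. apply Mmul_assoc.
Qed.

(* F(n+1,m) = (G-(n,m)) (G+(n,m) U(n,m)) with U a plus loop. *)
Lemma Gm_succ_n n m l : onS1 l -> Gm (n + 1)%Z m l = Gm n m l.
Proof.
  intro Hl. apply (birkhoff_minus_plus_unique (Gm (n + 1)%Z m) (Gm n m) (Gp (n + 1)%Z m)
                     (fun l => Mmul (Gp n m l) (Umat u p n m l)));
    auto using LambdaMinusStar_minus_loop_normed, LambdaPlus_plus_loop, Gm_det, Gp_det.
  - apply plus_loop_mul; [apply LambdaPlus_plus_loop, hGp| apply Umat_plus_loop, hp].
  - intros l' Hl'. rewrite <- hGdec, frame_step_n, hGdec by auto. apply Mmul_assoc.
Qed.

Lemma Fp_indep_m n m m' l : onS1 l -> Fp n m l = Fp n m' l.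
Proof.
  intro Hl. pose proof (Z_step_const (fun m => Fp n m l) (fun m => Fp_succ_m n m l Hl)) as H.
  simpl in H. rewrite (H m), (H m'). reflexivity.
Qed.

Lemma Gm_indep_n n n' m l : onS1 l -> Gm n m l = Gm n' m l.
Proof.
  intro Hl. pose proof (Z_step_const (fun n => Gm n m l) (fun n => Gm_succ_n n m l Hl)) as H.
  simpl in H. rewrite (H n), (H n'). reflexivity.
Qed.

(* On the axis m = 0, F(n,0) = (F(n,0) D(-g n)) D(g n) with D = phase_mat and
   g = gauge; the first factor obeys a recursion by xi_plus and the second is constant. *)
Definition axis_plus (n : Z) (l : Cplx) : M2 := Mmul (F n 0%Z l) (phase_mat (- gauge u n)).

Lemma axis_plus_step n l : onS1 l ->
  axis_plus (n + 1)%Z l = Mmul (axis_plus n l) (xi_plus (p n) (alpha u n) l).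
Proof.
  intro Hl. unfold axis_plus. rewrite frame_step_n, Umat_axis by auto.
  rewrite !Mmul_assoc, phase_mat_opp_r, Mmul_1_r. reflexivity.
Qed.

Lemma axis_plus_normed n : plus_loop_normed (axis_plus n).
Proof.
  apply (plus_loop_normed_Z_chain _ (fun n => xi_plus (p n) (alpha u n))).
  - apply (plus_loop_normed_ext (fun _ => Mid)); [apply plus_loop_normed_id|].
    intros l Hl. unfold axis_plus, gauge. rewrite frame_origin, Rminus_diag by auto.
    replace (- (0 / 2)) with 0 by field. rewrite phase_mat_0. symmetry. apply Mmul_1_l.
  - intro; apply xi_plus_plus_loop_normed, hp.
  - intros; apply xi_plus_det; auto.
  - intros; apply axis_plus_step; auto.
Qed.

Lemma Fp_axis n l : onS1 l -> Fp n 0%Z l = axis_plus n l.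
Proof.
  intro Hl. symmetry.
  apply (birkhoff_plus_minus_unique (axis_plus n) (Fp n 0%Z) (fun _ => phase_mat (gauge u n)) (Fm n 0%Z));
    auto using axis_plus_normed, LambdaPlusStar_plus_loop_normed, LambdaMinus_minus_loop,
               Fp_det, phase_mat_det.
  - apply plus_loop_const.
  - intros l' Hl'. rewrite <- hFdec by auto. unfold axis_plus.
    rewrite Mmul_assoc, phase_mat_mul, Rplus_opp_l, phase_mat_0. apply Mmul_1_r.
Qed.

Lemma Fp_potential n m l : onS1 l ->
  Mmul (Minv (Fp n m l)) (Fp (n + 1)%Z m l) = xi_plus (p n) (alpha u n) l.
Proof.
  intro Hl. rewrite (Fp_indep_m n m 0), (Fp_indep_m (n + 1) m 0), !Fp_axis, axis_plus_step by auto.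
  apply Mmul_Minv_cancel_l. rewrite <- Fp_axis by auto. apply Fp_det, Hl.
Qed.

Lemma axis_minus_normed m : minus_loop_normed (F 0%Z m).
Proof.
  apply (minus_loop_normed_Z_chain _ (Vmat u q 0%Z)).
  - apply (plus_loop_normed_ext (fun _ => Mid)); [apply plus_loop_normed_id|].
    intros l Hl. symmetry. apply frame_origin, onS1_conj, Hl.
  - intro; apply Vmat_minus_loop_normed, hq.
  - intros; apply Vmat_det; auto.
  - intros; apply frame_step_m; auto.
Qed.

Lemma Gm_axis m l : onS1 l -> Gm 0%Z m l = F 0%Z m l.
Proof.
  intro Hl. symmetry.
  apply (birkhoff_minus_plus_unique (F 0%Z m) (Gm 0%Z m) (fun _ => Mid) (Gp 0%Z m));
    auto using axis_minus_normed, LambdaMinusStar_minus_loop_normed, LambdaPlus_plus_loop,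
               Gm_det, Mdet_id, plus_loop_const.
  intros l' Hl'. rewrite <- hGdec by auto. apply Mmul_1_r.
Qed.

Lemma Gm_potential n m l : onS1 l ->
  Mmul (Minv (Gm n m l)) (Gm n (m + 1)%Z l) = xi_minus (q m) (beta u m) l.
Proof.
  intro Hl. rewrite (Gm_indep_n n 0 m), (Gm_indep_n n 0 (m + 1)), !Gm_axis, frame_step_m by auto.
  rewrite Mmul_Minv_cancel_l by (apply frame_det, Hl). apply Vmat_axis.
Qed.

End Discrete_frame.

Theorem theorem2p1
  (u : Z -> Z -> R) (p q : Z -> R)
  (hp : forall n : Z, 0 < Rabs (p n / 2) < 1)
  (hq : forall m : Z, 0 < Rabs (q m / 2) < 1)
  (F : Z -> Z -> Cplx -> M2)
  (hF : discrete_extended_frame F u p q)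
  (Fp Fm Gm Gp : Z -> Z -> Cplx -> M2)
  (hFp : forall n m, LambdaPlusStar (Fp n m))
  (hFm : forall n m, LambdaMinus (Fm n m))
  (hGm : forall n m, LambdaMinusStar (Gm n m))
  (hGp : forall n m, LambdaPlus (Gp n m))
  (hFdec : forall n m l, onS1 l -> F n m l = Mmul (Fp n m l) (Fm n m l))
  (hGdec : forall n m l, onS1 l -> F n m l = Mmul (Gm n m l) (Gp n m l)) :
  (forall n m m' l, onS1 l -> Fp n m l = Fp n m' l) /\
  (forall n n' m l, onS1 l -> Gm n m l = Gm n' m l) /\
  (forall n m l, onS1 l ->
     Mmul (Minv (Fp n m l)) (Fp (n + 1)%Z m l) = xi_plus (p n) (alpha u n) l) /\
  (forall n m l, onS1 l ->
     Mmul (Minv (Gm n m l)) (Gm n (m + 1)%Z l) = xi_minus (q m) (beta u m) l).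
Proof.
  split; [|split; [|split]].
  - exact (Fp_indep_m u p q hq F hF Fp Fm hFp hFm hFdec).
  - exact (Gm_indep_n u p q hp F hF Gm Gp hGm hGp hGdec).
  - exact (Fp_potential u p q hp hq F hF Fp Fm hFp hFm hFdec).
  - exact (Gm_potential u p q hp hq F hF Gm Gp hGm hGp hGdec).
Qed.
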